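(* Let $\omega$ be a regular weight. If $T\in B(X)$ and $x\in X$ satisfy $\|e^{tT}x\|\le C_x\,\omega(t)$ for all $t\in\mathbb{R}$ and some constant $C_x>0$, then $\sigma_T(x)\subset i\mathbb{R}$.
   Context: $X$ is a complex Banach space, $B(X)$ the bounded linear operators on $X$. A weight is a continuous function $\omega:\mathbb{R}\to[1,\infty)$ with $\omega(t+s)\le\omega(t)\omega(s)$ for all $t,s$; it is regular if $\int_{\mathbb{R}}\frac{\log\omega(t)}{1+t^2}\,dt<\infty$. For $T\in B(X)$ and $x\in X$, $\rho_T(x)$ is the set of $\lambda\in\mathbb{C}$ having an open neighbourhood $U$ and an analytic $u:U\to X$ with $(zI-T)u(z)=x$ on $U$; the local spectrum is $\sigma_T(x)=\mathbb{C}\setminus\rho_T(x)$. *)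

From Stdlib Require Import Reals Arith.
Open Scope R_scope.

Definition Complex : Type := (R * R)%type.
Definition Re (z : Complex) : R := fst z.
Definition Im (z : Complex) : R := snd z.
Definition RtoC (r : R) : Complex := (r, 0).
Definition C0 : Complex := (0, 0).
Definition C1 : Complex := (1, 0).
Definition Cadd (z w : Complex) : Complex := (fst z + fst w, snd z + snd w).
Definition Copp (z : Complex) : Complex := (- fst z, - snd z).
Definition Csub (z w : Complex) : Complex := Cadd z (Copp w).
Definition Cmul (z w : Complex) : Complex :=
  (fst z * fst w - snd z * snd w, fst z * snd w + snd z * fst w).
Definition Cmod (z : Complex) : R := sqrt (fst z ^ 2 + snd z ^ 2).
Fixpoint Cpow (z : Complex) (n : nat) : Complex :=
  match n with O => C1 | S k => Cmul z (Cpow z k) end.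

Record CBanach := {
  car :> Type;
  vadd : car -> car -> car;
  vzero : car;
  vopp : car -> car;
  vscal : Complex -> car -> car;
  vnorm : car -> R;
  vadd_assoc : forall x y z, vadd x (vadd y z) = vadd (vadd x y) z;
  vadd_comm : forall x y, vadd x y = vadd y x;
  vadd_0 : forall x, vadd x vzero = x;
  vadd_opp : forall x, vadd x (vopp x) = vzero;
  vscal_assoc : forall a b x, vscal a (vscal b x) = vscal (Cmul a b) x;
  vscal_1 : forall x, vscal C1 x = x;
  vscal_distr_v : forall a x y, vscal a (vadd x y) = vadd (vscal a x) (vscal a y);
  vscal_distr_c : forall a b x, vscal (Cadd a b) x = vadd (vscal a x) (vscal b x);
  vnorm_nonneg : forall x, 0 <= vnorm x;
  vnorm_eq0 : forall x, vnorm x = 0 -> x = vzero;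
  vnorm_triangle : forall x y, vnorm (vadd x y) <= vnorm x + vnorm y;
  vnorm_scal : forall a x, vnorm (vscal a x) = Cmod a * vnorm x;
  vcomplete : forall u : nat -> car,
    (forall eps, 0 < eps -> exists N, forall m n, (N <= m)%nat -> (N <= n)%nat ->
        vnorm (vadd (u m) (vopp (u n))) < eps) ->
    exists l, forall eps, 0 < eps -> exists N, forall n, (N <= n)%nat ->
        vnorm (vadd (u n) (vopp l)) < eps
}.

Arguments vadd {_}. Arguments vzero {_}. Arguments vopp {_}.
Arguments vscal {_}. Arguments vnorm {_}.

Definition vsub {X : CBanach} (x y : X) : X := vadd x (vopp y).

Definition vcv {X : CBanach} (u : nat -> X) (l : X) : Prop :=
  forall eps, 0 < eps -> exists N, forall n, (N <= n)%nat -> vnorm (vsub (u n) l) < eps.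

Fixpoint vsum {X : CBanach} (f : nat -> X) (n : nat) : X :=
  match n with O => f O | S k => vadd (vsum f k) (f (S k)) end.

Definition is_bounded_linear {X : CBanach} (T : X -> X) : Prop :=
  (forall x y, T (vadd x y) = vadd (T x) (T y)) /\
  (forall a x, T (vscal a x) = vscal a (T x)) /\
  (exists M, forall x, vnorm (T x) <= M * vnorm x).

Definition exp_op_at {X : CBanach} (T : X -> X) (t : R) (x : X) (y : X) : Prop :=
  vcv (vsum (fun k => vscal (RtoC (t ^ k / INR (Factorial.fact k))) (Nat.iter k T x))) y.

Definition Cball (z0 : Complex) (r : R) (z : Complex) : Prop := Cmod (Csub z z0) < r.

Definition Copen (U : Complex -> Prop) : Prop :=
  forall z, U z -> exists r, 0 < r /\ forall w, Cball z r w -> U w.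

Definition analytic_on {X : CBanach} (U : Complex -> Prop) (u : Complex -> X) : Prop :=
  forall z0, U z0 -> exists r (a : nat -> X), 0 < r /\
    forall z, Cball z0 r z ->
      vcv (vsum (fun k => vscal (Cpow (Csub z z0) k) (a k))) (u z).

Definition local_resolvent {X : CBanach} (T : X -> X) (x : X) (lam : Complex) : Prop :=
  exists (U : Complex -> Prop) (u : Complex -> X),
    Copen U /\ U lam /\ analytic_on U u /\
    forall z, U z -> vsub (vscal z (u z)) (T (u z)) = x.

Definition local_spectrum {X : CBanach} (T : X -> X) (x : X) (lam : Complex) : Prop :=
  ~ local_resolvent T x lam.

Definition is_weight (w : R -> R) : Prop :=
  (forall t, continuity_pt w t) /\
  (forall t, 1 <= w t) /\
  (forall t s, w (t + s) <= w t * w s).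

(* the integrand is continuous and nonnegative, so finiteness of the integral
   over R is boundedness of its integrals over compact intervals *)
Definition is_regular_weight (w : R -> R) : Prop :=
  is_weight w /\
  exists M, forall a b (pr : Riemann_integrable (fun t => ln (w t) / (1 + t ^ 2)) a b),
    RiemannInt pr <= M.

(** Let [Re lam <> 0].  Regularity of the weight forbids [w t >= exp (Re lam * t)]
    for all [t], so some [tau] has [w tau < exp (Re lam * tau)].  Put
    [A := T - lam] and [S := exp (tau A)].  Since [exp (t A) = exp (- t lam) exp (t T)],
    the orbit of [x] under [S] decays geometrically, with ratio
    [q := exp (- Re lam * tau) * w tau < 1].  Hence Neumann series produce vectors
    [v_k] with [(I - S) v_0 = x] and [(I - S) v_(k+1) = v_k], with [|v_k| <= K (1-q)^-(k+1)].
    Writing [I - S = (lam - T) G] with [G := sum_k tau^(k+1)/(k+1)! A^k], which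
    commutes with [T], the vectors [a_k := (-1)^k G^(k+1) v_k] satisfy
    [(lam - T) a_0 = x] and [(lam - T) a_(k+1) = - a_k] and grow at most
    geometrically, so [u z := sum_k (z - lam)^k a_k] is analytic near [lam] and solves
    [(z - T) u z = x]. *)
From Stdlib Require Import Reals Lra Lia ClassicalEpsilon Classical.
From Coquelicot Require Import Coquelicot.
Open Scope R_scope.

(** * Complex scalars *)

Lemma Cext (a b : Complex) : fst a = fst b -> snd a = snd b -> a = b.
Proof. destruct a, b; simpl; intros; subst; reflexivity. Qed.

Ltac cring := apply Cext; simpl; ring.

Lemma Cmul_comm a b : Cmul a b = Cmul b a. Proof. cring. Qed.
Lemma Cmul_assoc a b c : Cmul a (Cmul b c) = Cmul (Cmul a b) c. Proof. cring. Qed.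
Lemma Cmul_1l a : Cmul C1 a = a. Proof. unfold C1; cring. Qed.
Lemma Cmul_1r a : Cmul a C1 = a. Proof. unfold C1; cring. Qed.
Lemma Cadd_0r a : Cadd a C0 = a. Proof. unfold C0; cring. Qed.
Lemma RtoC_mul r s : RtoC (r * s) = Cmul (RtoC r) (RtoC s). Proof. unfold RtoC; cring. Qed.
Lemma RtoC_add r s : RtoC (r + s) = Cadd (RtoC r) (RtoC s). Proof. unfold RtoC; cring. Qed.
Lemma RtoC_pow r n : RtoC (r ^ n) = Cpow (RtoC r) n.
Proof. induction n; simpl; [reflexivity|]. rewrite RtoC_mul, IHn; auto. Qed.

(* [Complex] is Coquelicot's [C], and [Cmod], [Cmul], [Cadd] agree with its operations. *)
Lemma Cmod_mul a b : Cmod (Cmul a b) = Cmod a * Cmod b. Proof. exact (Cmod_mult a b). Qed.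
Lemma Cmod_add a b : Cmod (Cadd a b) <= Cmod a + Cmod b. Proof. exact (Cmod_triangle a b). Qed.
Lemma Cmod_nonneg a : 0 <= Cmod a. Proof. exact (Cmod_ge_0 a). Qed.
Lemma Cmod_RtoC r : Cmod (RtoC r) = Rabs r. Proof. exact (Cmod_R r). Qed.
Lemma Cmod_Copp a : Cmod (Copp a) = Cmod a. Proof. exact (Cmod_opp a). Qed.
Lemma Cmod_C1 : Cmod C1 = 1. Proof. exact Cmod_1. Qed.
Lemma Cmod_C0 : Cmod C0 = 0. Proof. exact Cmod_0. Qed.
Lemma Cmod_pow z n : Cmod (Cpow z n) = Cmod z ^ n.
Proof. induction n; simpl; [apply Cmod_C1|]. rewrite Cmod_mul, IHn; auto. Qed.
Lemma Cmod_sub_triangle z z1 z0 : Cmod (Csub z z0) <= Cmod (Csub z z1) + Cmod (Csub z1 z0).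
Proof.
  replace (Csub z z0) with (Cadd (Csub z z1) (Csub z1 z0)) by (unfold Csub; cring).
  apply Cmod_add.
Qed.

(** * Algebra and limits in a complex Banach space *)

Arguments vadd_assoc {_}. Arguments vadd_comm {_}. Arguments vadd_0 {_}. Arguments vadd_opp {_}.
Arguments vscal_assoc {_}. Arguments vscal_1 {_}. Arguments vscal_distr_v {_}.
Arguments vscal_distr_c {_}. Arguments vnorm_nonneg {_}. Arguments vnorm_eq0 {_}.
Arguments vnorm_triangle {_}. Arguments vnorm_scal {_}.

Section Vector_algebra.
Context {X : CBanach}.
Implicit Types x y z : X.

Lemma vadd_0l x : vadd vzero x = x. Proof. rewrite vadd_comm; apply vadd_0. Qed.
Lemma vopp_add_l x : vadd (vopp x) x = vzero. Proof. rewrite vadd_comm; apply vadd_opp. Qed.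

Lemma vadd_cancel_l x y z : vadd x y = vadd x z -> y = z.
Proof.
  intro H. rewrite <- (vadd_0l y), <- (vadd_0l z), <- (vopp_add_l x), <- !vadd_assoc, H.
  reflexivity.
Qed.

Lemma vadd_eq0 x y : vadd x y = vzero -> y = vopp x.
Proof. intro H. apply (vadd_cancel_l x). now rewrite H, vadd_opp. Qed.

Lemma vopp_opp x : vopp (vopp x) = x.
Proof. symmetry. apply vadd_eq0, vopp_add_l. Qed.

Lemma vopp_zero : vopp (@vzero X) = vzero.
Proof. symmetry. apply vadd_eq0, vadd_0. Qed.

Lemma vopp_vadd x y : vopp (vadd x y) = vadd (vopp x) (vopp y).
Proof.
  symmetry. apply vadd_eq0.
  rewrite (vadd_comm (vopp x)), vadd_assoc, <- (vadd_assoc x), vadd_opp, vadd_0, vadd_opp.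
  reflexivity.
Qed.

Lemma vscal_C0 x : vscal C0 x = vzero.
Proof. apply (vadd_cancel_l (vscal C0 x)). rewrite <- vscal_distr_c, Cadd_0r, vadd_0; auto. Qed.

Lemma vscal_zero a : vscal a (@vzero X) = vzero.
Proof. apply (vadd_cancel_l (vscal a vzero)). rewrite <- vscal_distr_v, !vadd_0; auto. Qed.

Lemma vscal_opp_c a x : vscal (Copp a) x = vopp (vscal a x).
Proof.
  apply vadd_eq0. rewrite <- vscal_distr_c.
  replace (Cadd a (Copp a)) with C0 by (unfold C0; cring). apply vscal_C0.
Qed.

Lemma vscal_opp_v a x : vscal a (vopp x) = vopp (vscal a x).
Proof. apply vadd_eq0. rewrite <- vscal_distr_v, vadd_opp. apply vscal_zero. Qed.

Lemma vopp_scal x : vopp x = vscal (Copp C1) x.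
Proof. rewrite vscal_opp_c, vscal_1; auto. Qed.

Lemma vnorm_opp x : vnorm (vopp x) = vnorm x.
Proof. rewrite vopp_scal, vnorm_scal, Cmod_Copp, Cmod_C1; ring. Qed.

Lemma vnorm_zero : vnorm (@vzero X) = 0.
Proof. rewrite <- (vscal_C0 vzero), vnorm_scal, Cmod_C0; ring. Qed.

Lemma vnorm_real_scal r x : vnorm (vscal (RtoC r) x) = Rabs r * vnorm x.
Proof. rewrite vnorm_scal, Cmod_RtoC; auto. Qed.

Lemma vsub_self x : vsub x x = vzero. Proof. apply vadd_opp. Qed.

Lemma vsub_0 x : vsub x vzero = x.
Proof. unfold vsub; rewrite vopp_zero; apply vadd_0. Qed.

Lemma vsub_eq0 x y : vsub x y = vzero -> x = y.
Proof. unfold vsub; intro H. apply vadd_eq0 in H. rewrite <- (vopp_opp x), <- H, vopp_opp; auto. Qed.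

Lemma vnorm_sub_sym x y : vnorm (vsub x y) = vnorm (vsub y x).
Proof. unfold vsub. rewrite <- vnorm_opp, vopp_vadd, vopp_opp, vadd_comm; auto. Qed.

Lemma vsub_add_sub x y z : vadd (vsub x y) (vsub y z) = vsub x z.
Proof. unfold vsub. rewrite <- vadd_assoc, (vadd_assoc (vopp y)), vopp_add_l, vadd_0l; auto. Qed.

Lemma vnorm_sub_triangle x y z : vnorm (vsub x z) <= vnorm (vsub x y) + vnorm (vsub y z).
Proof. rewrite <- (vsub_add_sub x y z). apply vnorm_triangle. Qed.

Lemma vsub_vadd (a b c d : X) : vsub (vadd a b) (vadd c d) = vadd (vsub a c) (vsub b d).
Proof.
  unfold vsub. rewrite vopp_vadd, <- !vadd_assoc. f_equal.
  rewrite !vadd_assoc. f_equal. apply vadd_comm.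
Qed.

Lemma vscal_sub a x y : vscal a (vsub x y) = vsub (vscal a x) (vscal a y).
Proof. unfold vsub. rewrite vscal_distr_v, vscal_opp_v; auto. Qed.

Lemma vsub_scal_c a b x : vsub (vscal a x) (vscal b x) = vscal (Csub a b) x.
Proof. unfold vsub, Csub. rewrite vscal_distr_c, vscal_opp_c; auto. Qed.

Lemma vadd_sub_r x y : vsub (vadd x y) y = x.
Proof. unfold vsub. rewrite <- vadd_assoc, vadd_opp, vadd_0; auto. Qed.

Lemma vsub_add_r x y : vadd (vsub x y) y = x.
Proof. unfold vsub. rewrite <- vadd_assoc, vopp_add_l, vadd_0; auto. Qed.

Lemma vnorm_sub_ge x y : Rabs (vnorm x - vnorm y) <= vnorm (vsub x y).
Proof.
  apply Rabs_le. split.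
  - pose proof (vnorm_triangle (vsub y x) x) as H.
    rewrite vsub_add_r, vnorm_sub_sym in H. lra.
  - pose proof (vnorm_triangle (vsub x y) y) as H. rewrite vsub_add_r in H. lra.
Qed.

End Vector_algebra.

Section Limits.
Context {X : CBanach}.
Implicit Types l : X.
Implicit Types u v : nat -> X.

Lemma vcv_unique u l1 l2 : vcv u l1 -> vcv u l2 -> l1 = l2.
Proof.
  intros H1 H2. apply vsub_eq0, vnorm_eq0.
  apply Rle_antisym; [|apply vnorm_nonneg]. apply Rnot_lt_le; intro Hp.
  destruct (H1 (vnorm (vsub l1 l2) / 2)) as [N1 HN1]; [lra|].
  destruct (H2 (vnorm (vsub l1 l2) / 2)) as [N2 HN2]; [lra|].
  specialize (HN1 (N1 + N2)%nat ltac:(lia)); specialize (HN2 (N1 + N2)%nat ltac:(lia)).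
  pose proof (vnorm_sub_triangle l1 (u (N1 + N2)%nat) l2) as H.
  rewrite (vnorm_sub_sym l1 (u _)) in H. lra.
Qed.

Lemma vcv_const l : vcv (fun _ => l) l.
Proof. intros e He; exists O; intros; rewrite vsub_self, vnorm_zero; auto. Qed.

Lemma vcv_ext u v l : (forall n, u n = v n) -> vcv u l -> vcv v l.
Proof. intros E H e He; destruct (H e He) as [N HN]; exists N; intros; rewrite <- E; auto. Qed.

Lemma vcv_ext_eventually u v l N0 :
  (forall n, (N0 <= n)%nat -> u n = v n) -> vcv u l -> vcv v l.
Proof.
  intros E H e He; destruct (H e He) as [N HN]; exists (N + N0)%nat; intros.
  rewrite <- E by lia; apply HN; lia.
Qed.

Lemma vcv_shift u l : vcv u l -> vcv (fun n => u (S n)) l.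
Proof. intros H e He; destruct (H e He) as [N HN]; exists N; intros; apply HN; lia. Qed.

Lemma vcv_unshift u l : vcv (fun n => u (S n)) l -> vcv u l.
Proof.
  intros H e He; destruct (H e He) as [N HN]; exists (S N); intros [|n] Hn; [lia|].
  apply HN; lia.
Qed.

Lemma vcv_add u v l (m : X) : vcv u l -> vcv v m -> vcv (fun n => vadd (u n) (v n)) (vadd l m).
Proof.
  intros H1 H2 e He.
  destruct (H1 (e / 2)) as [N1 HN1]; [lra|]. destruct (H2 (e / 2)) as [N2 HN2]; [lra|].
  exists (N1 + N2)%nat; intros n Hn. rewrite vsub_vadd.
  eapply Rle_lt_trans; [apply vnorm_triangle|].
  specialize (HN1 n ltac:(lia)); specialize (HN2 n ltac:(lia)). lra.
Qed.

Lemma vcv_lipschitz (f : X -> X) M u l :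
  0 <= M -> (forall y z, vnorm (vsub (f y) (f z)) <= M * vnorm (vsub y z)) ->
  vcv u l -> vcv (fun n => f (u n)) (f l).
Proof.
  intros HM Hf H e He.
  destruct (H (e / (M + 1))) as [N HN]; [apply Rdiv_lt_0_compat; lra|].
  exists N; intros n Hn. eapply Rle_lt_trans; [apply Hf|].
  specialize (HN n Hn). pose proof (vnorm_nonneg (vsub (u n) l)).
  apply Rle_lt_trans with ((M + 1) * vnorm (vsub (u n) l)); [nra|].
  apply (Rmult_lt_compat_l (M + 1)) in HN; [|lra].
  replace ((M + 1) * (e / (M + 1))) with e in HN by (field; lra). exact HN.
Qed.

Lemma vcv_scal a u l : vcv u l -> vcv (fun n => vscal a (u n)) (vscal a l).
Proof.
  apply vcv_lipschitz with (M := Cmod a); [apply Cmod_nonneg|].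
  intros y z. rewrite <- vscal_sub, vnorm_scal. lra.
Qed.

Lemma vcv_sub u v l (m : X) : vcv u l -> vcv v m -> vcv (fun n => vsub (u n) (v n)) (vsub l m).
Proof.
  intros Hu Hv. apply vcv_add; auto.
  rewrite vopp_scal. apply (vcv_ext (fun n => vscal (Copp C1) (v n))).
  - intro n. symmetry. apply vopp_scal.
  - apply vcv_scal; auto.
Qed.

Lemma vcv_norm_le u l B : vcv u l -> (forall n, vnorm (u n) <= B) -> vnorm l <= B.
Proof.
  intros H Hb. apply Rnot_lt_le; intro Hc.
  destruct (H (vnorm l - B)) as [N HN]; [lra|]. specialize (HN N (le_n _)).
  pose proof (vnorm_sub_ge l (u N)) as Hr. rewrite vnorm_sub_sym in Hr.
  pose proof (Rle_abs (vnorm l - vnorm (u N))). specialize (Hb N). lra.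
Qed.

Lemma vcv_add_vanishing l (e : nat -> X) (c : nat -> R) :
  (forall n, vnorm (e n) <= c n) -> Un_cv c 0 -> vcv (fun n => vadd l (e n)) l.
Proof.
  intros He Hc eps Heps. destruct (Hc eps Heps) as [N HN]. exists N. intros n Hn.
  rewrite vadd_comm, vadd_sub_r. specialize (HN n Hn). unfold R_dist in HN.
  rewrite Rminus_0_r in HN. pose proof (Rle_abs (c n)). pose proof (He n). lra.
Qed.

Lemma vcv_scal_c (c : nat -> Complex) (c0 : Complex) (x : X) :
  (forall e, 0 < e -> exists N, forall n, (N <= n)%nat -> Cmod (Csub (c n) c0) < e) ->
  vcv (fun n => vscal (c n) x) (vscal c0 x).
Proof.
  intros H e He.
  destruct (H (e / (vnorm x + 1))) as [N HN].
  { apply Rdiv_lt_0_compat; auto. pose proof (vnorm_nonneg x); lra. }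
  exists N; intros n Hn. rewrite vsub_scal_c, vnorm_scal. specialize (HN n Hn).
  pose proof (vnorm_nonneg x). pose proof (Cmod_nonneg (Csub (c n) c0)).
  apply Rle_lt_trans with (Cmod (Csub (c n) c0) * (vnorm x + 1)); [nra|].
  apply (Rmult_lt_compat_r (vnorm x + 1)) in HN; [|lra].
  replace (e / (vnorm x + 1) * (vnorm x + 1)) with e in HN by (field; lra). exact HN.
Qed.

Definition vCauchy u := forall eps, 0 < eps ->
  exists N, forall m n, (N <= m)%nat -> (N <= n)%nat -> vnorm (vsub (u m) (u n)) < eps.

Lemma vCauchy_of_one_sided u :
  (forall e, 0 < e -> exists N, forall m n, (n <= m)%nat -> (N <= n)%nat ->
     vnorm (vsub (u m) (u n)) < e) -> vCauchy u.
Proof.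
  intros H e He. destruct (H e He) as [N HN]. exists N. intros m n Hm Hn.
  destruct (Compare_dec.le_lt_dec n m) as [Hnm|Hmn]; [apply HN; auto|].
  rewrite vnorm_sub_sym. apply HN; lia.
Qed.

Definition vlim u : X := epsilon (inhabits vzero) (fun l => vcv u l).

Lemma vlim_spec u : (exists l, vcv u l) -> vcv u (vlim u).
Proof. apply epsilon_spec. Qed.

Lemma vlim_eq u l : vcv u l -> vlim u = l.
Proof. intro H. apply (vcv_unique u); auto. apply vlim_spec; eauto. Qed.

End Limits.

(** * Series *)

Lemma partial_sum_mono (f : nat -> R) n m :
  (forall k, 0 <= f k) -> (n <= m)%nat -> sum_f_R0 f n <= sum_f_R0 f m.
Proof. intros Hf Hnm. induction Hnm; [lra|]. simpl. pose proof (Hf (S m)); lra. Qed.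

Lemma term_le_partial_sum (f : nat -> R) j N :
  (forall k, 0 <= f k) -> (j <= N)%nat -> f j <= sum_f_R0 f N.
Proof.
  intros Hf H. eapply Rle_trans; [|apply (partial_sum_mono f j N Hf H)].
  destruct j; simpl; [lra|]. pose proof (cond_pos_sum f j Hf). lra.
Qed.

Lemma sum_f_R0_swap (h : nat -> nat -> R) n m :
  sum_f_R0 (fun i => sum_f_R0 (h i) m) n = sum_f_R0 (fun j => sum_f_R0 (fun i => h i j) n) m.
Proof. induction n; simpl; [reflexivity|]. rewrite IHn, <- sum_plus. reflexivity. Qed.

Definition is_vseries {X : CBanach} (f : nat -> X) (l : X) := vcv (vsum f) l.

Section Series.
Context {X : CBanach}.
Implicit Types l : X.
Implicit Types f g : nat -> X.

Lemma vsum_ext f g n : (forall k, (k <= n)%nat -> f k = g k) -> vsum f n = vsum g n.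
Proof. induction n; simpl; intros H; [apply H; lia|]. rewrite IHn, H; auto. Qed.

Lemma vsum_additive (L : X -> X) f n : (forall a b, L (vadd a b) = vadd (L a) (L b)) ->
  L (vsum f n) = vsum (fun k => L (f k)) n.
Proof. intro HL. induction n; simpl; auto. rewrite HL, IHn; auto. Qed.

Lemma vsum_add f g n : vsum (fun k => vadd (f k) (g k)) n = vadd (vsum f n) (vsum g n).
Proof.
  induction n; simpl; auto. rewrite IHn, <- !vadd_assoc. f_equal.
  rewrite !vadd_assoc. f_equal. apply vadd_comm.
Qed.

Lemma vsum_scal a f n : vscal a (vsum f n) = vsum (fun k => vscal a (f k)) n.
Proof. apply vsum_additive. intros; apply vscal_distr_v. Qed.

Lemma vsum_sub f g n : vsum (fun k => vsub (f k) (g k)) n = vsub (vsum f n) (vsum g n).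
Proof.
  unfold vsub. rewrite vsum_add. f_equal. symmetry.
  apply vsum_additive. intros; apply vopp_vadd.
Qed.

Lemma vsum_S f n : vsum f (S n) = vadd (f O) (vsum (fun k => f (S k)) n).
Proof.
  induction n; [reflexivity|].
  change (vsum f (S (S n))) with (vadd (vsum f (S n)) (f (S (S n)))).
  rewrite IHn. simpl. rewrite vadd_assoc; auto.
Qed.

Lemma vsum_swap (h : nat -> nat -> X) n m :
  vsum (fun i => vsum (h i) m) n = vsum (fun j => vsum (fun i => h i j) n) m.
Proof. induction n; simpl; [reflexivity|]. rewrite IHn, <- vsum_add. reflexivity. Qed.

Lemma vsum_norm f n : vnorm (vsum f n) <= sum_f_R0 (fun k => vnorm (f k)) n.
Proof. induction n; simpl; [lra|]. eapply Rle_trans; [apply vnorm_triangle|]. lra. Qed.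

Lemma vsum_diff_norm f n m : (n <= m)%nat ->
  vnorm (vsub (vsum f m) (vsum f n)) <=
  sum_f_R0 (fun k => vnorm (f k)) m - sum_f_R0 (fun k => vnorm (f k)) n.
Proof.
  intro Hnm. induction Hnm; [rewrite vsub_self, vnorm_zero; lra|]. simpl.
  replace (vsub (vadd (vsum f m) (f (S m))) (vsum f n))
    with (vadd (vsub (vsum f m) (vsum f n)) (f (S m))).
  - eapply Rle_trans; [apply vnorm_triangle|]. lra.
  - unfold vsub. rewrite <- !vadd_assoc. f_equal. apply vadd_comm.
Qed.

Lemma vseries_abs_conv f B : (forall n, sum_f_R0 (fun k => vnorm (f k)) n <= B) ->
  exists l, is_vseries f l /\ vnorm l <= B.
Proof.
  intro HB. set (P := fun n => sum_f_R0 (fun k => vnorm (f k)) n).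
  assert (Hg : Un_growing P).
  { intro n; unfold P; simpl. pose proof (vnorm_nonneg (f (S n))); lra. }
  destruct (growing_cv P Hg) as [a Ha]; [exists B; intros x [n ->]; apply HB|].
  assert (HC : vCauchy (vsum f)).
  { apply vCauchy_of_one_sided. intros e He.
    destruct (CV_Cauchy P (exist _ a Ha) e He) as [N HN]. exists N. intros m n Hnm Hn.
    eapply Rle_lt_trans; [apply vsum_diff_norm; auto|].
    specialize (HN m n ltac:(lia) Hn). unfold R_dist in HN.
    pose proof (Rle_abs (P m - P n)). unfold P in *. lra. }
  destruct (vcomplete X _ HC) as [l Hl]. exists l; split; auto.
  apply (vcv_norm_le _ _ _ Hl). intro n. eapply Rle_trans; [apply vsum_norm|apply HB].
Qed.

Lemma is_vseries_unique f l1 l2 : is_vseries f l1 -> is_vseries f l2 -> l1 = l2.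
Proof. apply vcv_unique. Qed.

Lemma is_vseries_scal a f l : is_vseries f l -> is_vseries (fun k => vscal a (f k)) (vscal a l).
Proof. intro H. eapply vcv_ext; [intro n; apply vsum_scal|]. apply vcv_scal; auto. Qed.

Lemma is_vseries_shift f l : is_vseries f l -> is_vseries (fun k => f (S k)) (vsub l (f O)).
Proof.
  intro H. apply (vcv_ext (fun n => vsub (vsum f (S n)) (f O))).
  - intro n. rewrite vsum_S, vadd_comm. apply vadd_sub_r.
  - apply vcv_sub; [apply vcv_shift; auto|apply vcv_const].
Qed.

Lemma is_vseries_unshift f l : is_vseries (fun k => f (S k)) l -> is_vseries f (vadd (f O) l).
Proof.
  intro H. apply vcv_unshift.
  apply (vcv_ext (fun n => vadd (f O) (vsum (fun k => f (S k)) n))).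
  - intro n; symmetry; apply vsum_S.
  - apply vcv_add; auto. apply vcv_const.
Qed.

Lemma is_vseries_finite f m : (forall k, (m < k)%nat -> f k = vzero) -> is_vseries f (vsum f m).
Proof.
  intro H. apply (vcv_ext_eventually (fun _ => vsum f m) _ _ m); [|apply vcv_const].
  intros n Hn. induction Hn; [reflexivity|]. simpl. rewrite <- IHHn, H by lia. symmetry; apply vadd_0.
Qed.

Lemma is_vseries_zero_prefix f l m : (forall k, (k < m)%nat -> f k = vzero) ->
  is_vseries (fun k => f (k + m)%nat) l -> is_vseries f l.
Proof.
  revert f; induction m as [|m IH]; intros f Hz H.
  - eapply vcv_ext; [|exact H]. intro n; apply vsum_ext; intros; rewrite Nat.add_0_r; auto.
  - assert (H' : is_vseries (fun k => f (S k)) l).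
    { apply (IH (fun k => f (S k))); [intros; apply Hz; lia|].
      eapply vcv_ext; [|exact H]. intro n; apply vsum_ext; intros; f_equal; lia. }
    pose proof (is_vseries_unshift _ _ H') as Hu. rewrite Hz, vadd_0l in Hu by lia. exact Hu.
Qed.

End Series.

(** * Interchanging the order of summation *)

Section Double_series.
Context {X : CBanach}.
Variable f : nat -> nat -> X.

Definition square_sum N := vsum (fun i => vsum (f i) N) N.
Definition square_norm_sum N := sum_f_R0 (fun i => sum_f_R0 (fun j => vnorm (f i j)) N) N.

Lemma square_norm_sum_mono N M : (N <= M)%nat -> square_norm_sum N <= square_norm_sum M.
Proof.
  intro H. unfold square_norm_sum.
  apply Rle_trans with (sum_f_R0 (fun i => sum_f_R0 (fun j => vnorm (f i j)) M) N).
  - apply sum_Rle. intros i _. apply partial_sum_mono; auto. intro; apply vnorm_nonneg.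
  - apply partial_sum_mono; auto. intro; apply cond_pos_sum. intro; apply vnorm_nonneg.
Qed.

Lemma vcv_vsum (g : nat -> nat -> X) (l : nat -> X) N :
  (forall i, vcv (g i) (l i)) -> vcv (fun K => vsum (fun i => g i K) N) (vsum l N).
Proof. intro H. induction N; simpl; [apply H|]. apply vcv_add; auto. Qed.

(* The rows [i <= N] summed beyond column [N] lie outside the [N]-square. *)
Lemma row_sums_minus_square N K (r : nat -> X) : (forall i, is_vseries (f i) (r i)) ->
  (forall M, square_norm_sum M <= K) ->
  vnorm (vsub (vsum r N) (square_sum N)) <= K - square_norm_sum N.
Proof.
  intros Hr HK. unfold square_sum. rewrite <- vsum_sub.
  apply (vcv_norm_le (fun M => vsum (fun i => vsub (vsum (f i) (M + N)) (vsum (f i) N)) N)).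
  - apply vcv_vsum. intro i. apply vcv_sub; [|apply vcv_const].
    intros e He. destruct (Hr i e He) as [M HM]. exists M. intros n Hn. apply HM; lia.
  - intro M. eapply Rle_trans; [apply vsum_norm|].
    apply Rle_trans with
      (sum_f_R0 (fun i => sum_f_R0 (fun j => vnorm (f i j)) (M + N)) N - square_norm_sum N).
    + unfold square_norm_sum. rewrite <- minus_sum.
      apply sum_Rle. intros i _. apply vsum_diff_norm. lia.
    + pose proof (HK (M + N)%nat) as HMN. unfold square_norm_sum in *.
      assert (sum_f_R0 (fun i => sum_f_R0 (fun j => vnorm (f i j)) (M + N)) N <=
              sum_f_R0 (fun i => sum_f_R0 (fun j => vnorm (f i j)) (M + N)) (M + N)).
      { apply partial_sum_mono; [|lia]. intro; apply cond_pos_sum; intro; apply vnorm_nonneg. }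
      lra.
Qed.

End Double_series.

(* Row and column partial sums both lie within [sup square_norm_sum - square_norm_sum N]
   of [square_sum N]. *)
Lemma double_series_swap {X : CBanach} (f : nat -> nat -> X) B (r c : nat -> X) (L1 L2 : X) :
  (forall N, square_norm_sum f N <= B) ->
  (forall i, is_vseries (f i) (r i)) -> (forall j, is_vseries (fun i => f i j) (c j)) ->
  is_vseries r L1 -> is_vseries c L2 -> L1 = L2.
Proof.
  intros HB Hr Hc H1 H2.
  assert (Hg : Un_growing (square_norm_sum f)) by (intro n; apply square_norm_sum_mono; lia).
  destruct (growing_cv _ Hg) as [a Ha]; [exists B; intros x [n ->]; apply HB|].
  pose proof (growing_ineq _ a Hg Ha) as Hle.
  assert (Ht : forall N, square_norm_sum (fun i j => f j i) N = square_norm_sum f N).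
  { intro N. unfold square_norm_sum. symmetry. apply sum_f_R0_swap. }
  assert (Hrow := fun N => row_sums_minus_square f N a r Hr Hle).
  assert (Hcol := fun N => row_sums_minus_square (fun i j => f j i) N a c Hc
                             (fun M => ltac:(rewrite Ht; apply Hle))).
  apply vsub_eq0. apply (vcv_unique (fun N => vsub (vsum r N) (vsum c N))); [apply vcv_sub; auto|].
  intros e He. destruct (Ha (e / 2)) as [N HN]; [lra|]. exists N. intros n Hn.
  specialize (HN n Hn). unfold R_dist in HN. apply Rabs_def2 in HN as [_ HN].
  rewrite vsub_0, <- (vsub_add_sub _ (square_sum f n)).
  eapply Rle_lt_trans; [apply vnorm_triangle|].
  pose proof (Hrow n) as Hr'. pose proof (Hcol n) as Hc'. rewrite Ht in Hc'.
  replace (square_sum (fun i j => f j i) n) with (square_sum f n) in Hc'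
    by (unfold square_sum; symmetry; apply vsum_swap).
  rewrite (vnorm_sub_sym (square_sum f n)). lra.
Qed.

(** * Bounded operators and their power series *)

Lemma exp_partial_sum_le r n : 0 <= r -> sum_f_R0 (fun k => r ^ k / INR (Factorial.fact k)) n <= exp r.
Proof.
  intro Hr. unfold exp. destruct (exist_exp r) as [l Hl]. simpl.
  replace (sum_f_R0 (fun k => r ^ k / INR (Factorial.fact k)) n)
    with (sum_f_R0 (fun i => / INR (Factorial.fact i) * r ^ i) n)
    by (apply sum_eq; intros; unfold Rdiv; ring).
  apply growing_ineq; [|exact Hl]. intro m. rewrite tech5.
  assert (0 <= / INR (Factorial.fact (S m)) * r ^ S m); [|lra].
  apply Rmult_le_pos; [left; apply Rinv_0_lt_compat, INR_fact_lt_0|apply pow_le; auto].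
Qed.

Lemma exp_series_cv r : Un_cv (fun n => sum_f_R0 (fun k => r ^ k / INR (Factorial.fact k)) n) (exp r).
Proof.
  unfold exp. destruct (exist_exp r) as [l Hl]. simpl.
  intros e He. destruct (Hl e He) as [N HN]. exists N. intros n Hn.
  replace (sum_f_R0 (fun k => r ^ k / INR (Factorial.fact k)) n)
    with (sum_f_R0 (fun i => / INR (Factorial.fact i) * r ^ i) n)
    by (apply sum_eq; intros; unfold Rdiv; ring).
  apply HN; auto.
Qed.

Section Bounded_operators.
Context {X : CBanach}.
Implicit Types x y : X.
Implicit Types B L : X -> X.

Lemma bl_add B x y : is_bounded_linear B -> B (vadd x y) = vadd (B x) (B y).
Proof. intros [H _]; auto. Qed.

Lemma bl_scal B a x : is_bounded_linear B -> B (vscal a x) = vscal a (B x).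
Proof. intros [_ [H _]]; auto. Qed.

Lemma bl_bound B : is_bounded_linear B ->
  exists M, 0 <= M /\ forall x, vnorm (B x) <= M * vnorm x.
Proof.
  intros [_ [_ [M HM]]]. exists (Rabs M). split; [apply Rabs_pos|]. intro x.
  eapply Rle_trans; [apply HM|]. apply Rmult_le_compat_r; [apply vnorm_nonneg|apply Rle_abs].
Qed.

Lemma bl_opp B x : is_bounded_linear B -> B (vopp x) = vopp (B x).
Proof. intro H. rewrite !vopp_scal, bl_scal; auto. Qed.

Lemma bl_sub B x y : is_bounded_linear B -> B (vsub x y) = vsub (B x) (B y).
Proof. intro H. unfold vsub. rewrite bl_add, bl_opp; auto. Qed.

Lemma bl_vcv B u l : is_bounded_linear B -> vcv u l -> vcv (fun n => B (u n)) (B l).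
Proof.
  intro HB. destruct (bl_bound B HB) as [M [HM0 HM]].
  apply vcv_lipschitz with M; auto. intros y z. rewrite <- bl_sub; auto.
Qed.

Lemma bl_vsum B f n : is_bounded_linear B -> B (vsum f n) = vsum (fun k => B (f k)) n.
Proof. intro H. apply vsum_additive. intros; apply bl_add; auto. Qed.

Lemma bl_vseries B f l : is_bounded_linear B -> is_vseries f l -> is_vseries (fun k => B (f k)) (B l).
Proof.
  intros HB H. apply (vcv_ext (fun n => B (vsum f n))); [intro n; apply bl_vsum; auto|].
  apply bl_vcv; auto.
Qed.

Lemma bl_ext B L : is_bounded_linear B -> (forall z, B z = L z) -> is_bounded_linear L.
Proof.
  intros HB Hext. destruct (bl_bound B HB) as [M [_ HM]]. split; [|split].
  - intros; rewrite <- !Hext; apply (bl_add B); auto.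
  - intros; rewrite <- !Hext; apply (bl_scal B); auto.
  - exists M; intros; rewrite <- Hext; auto.
Qed.

Lemma bl_id : is_bounded_linear (fun y : X => y).
Proof. split; [|split]; auto. exists 1; intros; lra. Qed.

Lemma bl_comp B L : is_bounded_linear B -> is_bounded_linear L ->
  is_bounded_linear (fun y => B (L y)).
Proof.
  intros HB HL. destruct (bl_bound B HB) as [M [HM0 HM]]. destruct (bl_bound L HL) as [K [HK0 HK]].
  split; [|split]; [intros; rewrite !bl_add; auto|intros; rewrite !bl_scal; auto|].
  exists (M * K). intro x. eapply Rle_trans; [apply HM|].
  rewrite Rmult_assoc. apply Rmult_le_compat_l; auto.
Qed.

Lemma bl_plus B L : is_bounded_linear B -> is_bounded_linear L ->
  is_bounded_linear (fun y => vadd (B y) (L y)).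
Proof.
  intros HB HL. destruct (bl_bound B HB) as [M [HM0 HM]]. destruct (bl_bound L HL) as [K [HK0 HK]].
  split; [|split].
  - intros. rewrite (bl_add B), (bl_add L) by auto. rewrite <- !vadd_assoc. f_equal.
    rewrite !vadd_assoc. f_equal. apply vadd_comm.
  - intros. rewrite (bl_scal B), (bl_scal L), vscal_distr_v; auto.
  - exists (M + K). intro x. eapply Rle_trans; [apply vnorm_triangle|].
    pose proof (HM x); pose proof (HK x); lra.
Qed.

Lemma bl_smul B a : is_bounded_linear B -> is_bounded_linear (fun y => vscal a (B y)).
Proof.
  intro HB. destruct (bl_bound B HB) as [M [HM0 HM]]. split; [|split].
  - intros; rewrite bl_add, vscal_distr_v; auto.
  - intros; rewrite bl_scal, !vscal_assoc, Cmul_comm; auto.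
  - exists (Cmod a * M). intro x. rewrite vnorm_scal, Rmult_assoc.
    apply Rmult_le_compat_l; auto. apply Cmod_nonneg.
Qed.

Lemma bl_scalar a : is_bounded_linear (fun y : X => vscal a y).
Proof. apply (bl_smul (fun y => y)), bl_id. Qed.

Lemma iter_add B i j y : Nat.iter (i + j) B y = Nat.iter i B (Nat.iter j B y).
Proof. induction i; simpl; auto. rewrite IHi; auto. Qed.

Lemma iter_S_inner B k y : Nat.iter (S k) B y = Nat.iter k B (B y).
Proof. replace (S k) with (k + 1)%nat by lia. rewrite iter_add; auto. Qed.

Lemma iter_comm B L k y : (forall y, L (B y) = B (L y)) -> L (Nat.iter k B y) = Nat.iter k B (L y).
Proof. intro H. induction k; simpl; auto. rewrite H, IHk; auto. Qed.

Lemma iter_ext B L k y : (forall y, B y = L y) -> Nat.iter k B y = Nat.iter k L y.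
Proof. intro H. induction k; simpl; auto. rewrite H, IHk; auto. Qed.

Lemma bl_iter B k : is_bounded_linear B -> is_bounded_linear (fun y => Nat.iter k B y).
Proof.
  intro H. induction k; simpl; [apply bl_id|].
  apply (bl_comp B (fun y => Nat.iter k B y)); auto.
Qed.

Lemma iter_norm_le B M k y : 0 <= M -> (forall x, vnorm (B x) <= M * vnorm x) ->
  vnorm (Nat.iter k B y) <= M ^ k * vnorm y.
Proof.
  intros HM H. induction k; simpl; [lra|]. eapply Rle_trans; [apply H|].
  rewrite Rmult_assoc. apply Rmult_le_compat_l; auto.
Qed.

(* [sum_k c k B^k y]; an arbitrary vector when the series diverges. *)
Definition opser_term (c : nat -> R) B y k := vscal (RtoC (c k)) (Nat.iter k B y).
Definition opser (c : nat -> R) B y : X := vlim (vsum (opser_term c B y)).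

Definition opser_dominated (c : nat -> R) B := exists M K, 0 <= M /\
  (forall x, vnorm (B x) <= M * vnorm x) /\ forall n, sum_f_R0 (fun k => Rabs (c k) * M ^ k) n <= K.

Lemma opser_abs_conv c B : opser_dominated c B ->
  exists K, forall y, exists l, is_vseries (opser_term c B y) l /\ vnorm l <= K * vnorm y.
Proof.
  intros [M [K [HM0 [HM HK]]]]. exists K. intro y. apply vseries_abs_conv. intro n.
  apply Rle_trans with (sum_f_R0 (fun k => Rabs (c k) * M ^ k) n * vnorm y).
  - rewrite Rmult_comm, scal_sum. apply sum_Rle. intros k _. unfold opser_term.
    rewrite vnorm_real_scal, Rmult_assoc. apply Rmult_le_compat_l; [apply Rabs_pos|].
    apply iter_norm_le; auto.
  - apply Rmult_le_compat_r; auto. apply vnorm_nonneg.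
Qed.

Lemma opser_sum c B y : opser_dominated c B -> is_vseries (opser_term c B y) (opser c B y).
Proof.
  intro Hc. destruct (opser_abs_conv c B Hc) as [K HK]. destruct (HK y) as [l [Hl _]].
  apply vlim_spec; eauto.
Qed.

Lemma opser_eq c B y l : is_vseries (opser_term c B y) l -> opser c B y = l.
Proof. apply vlim_eq. Qed.

Lemma bl_opser c B : is_bounded_linear B -> opser_dominated c B -> is_bounded_linear (opser c B).
Proof.
  intros HB Hc. split; [|split].
  - intros x y. apply opser_eq.
    apply (vcv_ext (fun n => vadd (vsum (opser_term c B x) n) (vsum (opser_term c B y) n))).
    + intro n. rewrite <- vsum_add. apply vsum_ext. intros k _. unfold opser_term.
      rewrite <- vscal_distr_v, (bl_add _ _ _ (bl_iter B k HB)). reflexivity.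
    + apply vcv_add; apply opser_sum; auto.
  - intros a x. apply opser_eq.
    apply (vcv_ext (fun n => vscal a (vsum (opser_term c B x) n))).
    + intro n. rewrite vsum_scal. apply vsum_ext. intros k _. unfold opser_term.
      rewrite (bl_scal _ _ _ (bl_iter B k HB)), !vscal_assoc, Cmul_comm; auto.
    + apply vcv_scal, opser_sum; auto.
  - destruct (opser_abs_conv c B Hc) as [K HK]. exists K. intro y.
    destruct (HK y) as [l [Hl Hn]]. rewrite (opser_eq c B y l Hl). exact Hn.
Qed.

Lemma opser_comm c B L y : is_bounded_linear B -> opser_dominated c B -> is_bounded_linear L ->
  (forall y, L (B y) = B (L y)) -> L (opser c B y) = opser c B (L y).
Proof.
  intros HB Hc HL Hcomm. symmetry. apply opser_eq.
  apply (vcv_ext (fun n => L (vsum (opser_term c B y) n))).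
  - intro n. rewrite bl_vsum by auto. apply vsum_ext; intros k _. unfold opser_term.
    rewrite bl_scal, iter_comm; auto.
  - apply bl_vcv, opser_sum; auto.
Qed.

Lemma opser_apply c B y : is_bounded_linear B -> opser_dominated c B ->
  is_vseries (fun k => vscal (RtoC (c k)) (Nat.iter (S k) B y)) (B (opser c B y)).
Proof.
  intros HB Hc. eapply vcv_ext; [|apply (bl_vseries B _ _ HB (opser_sum c B y Hc))].
  intro n. apply vsum_ext; intros k _. unfold opser_term. rewrite bl_scal; auto.
Qed.

Definition exp_coef (t : R) (k : nat) := t ^ k / INR (Factorial.fact k).
Definition opexp B (t : R) := opser (exp_coef t) B.

Lemma exp_coef_nonneg t k : 0 <= t -> 0 <= exp_coef t k.
Proof.
  intro. unfold exp_coef. apply Rmult_le_pos; [apply pow_le; auto|].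
  left; apply Rinv_0_lt_compat, INR_fact_lt_0.
Qed.

Lemma exp_coef_abs t k : Rabs (exp_coef t k) = exp_coef (Rabs t) k.
Proof.
  unfold exp_coef, Rdiv. rewrite Rabs_mult, RPow_abs, Rabs_inv, (Rabs_pos_eq (INR _)) by apply pos_INR.
  reflexivity.
Qed.

Lemma exp_coef_0 t : exp_coef t 0 = 1.
Proof. unfold exp_coef; simpl. field. Qed.

Lemma exp_coef_S t i : INR (S i) * exp_coef t (S i) = t * exp_coef t i.
Proof.
  unfold exp_coef. rewrite fact_simpl, mult_INR. simpl pow.
  pose proof (INR_fact_neq_0 i). assert (INR (S i) <> 0) by (apply not_0_INR; lia). field; auto.
Qed.

Lemma exp_coef_1_mul M k : exp_coef 1 k * M ^ k = exp_coef M k.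
Proof. unfold exp_coef. rewrite pow1. unfold Rdiv. ring. Qed.

Lemma exp_coef_S_le t k : Rabs (exp_coef t (S k)) <= Rabs t * exp_coef (Rabs t) k.
Proof.
  rewrite exp_coef_abs. unfold exp_coef. simpl pow. rewrite fact_simpl, mult_INR.
  pose proof (INR_fact_lt_0 k). pose proof (pow_le (Rabs t) k (Rabs_pos t)). pose proof (Rabs_pos t).
  assert (1 <= INR (S k)) by (apply (le_INR 1); lia).
  unfold Rdiv. rewrite Rinv_mult. rewrite <- !Rmult_assoc.
  apply Rmult_le_compat_r; [left; apply Rinv_0_lt_compat; auto|].
  rewrite Rmult_comm, <- Rmult_assoc.
  apply Rmult_le_compat_r; [nra|]. rewrite <- (Rmult_1_l (Rabs t)) at 2.
  apply Rmult_le_compat_r; auto. rewrite <- Rinv_1. apply Rinv_le_contravar; lra.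
Qed.

Lemma exp_coef_sum_le M n : 0 <= M -> sum_f_R0 (exp_coef M) n <= exp M.
Proof. apply exp_partial_sum_le. Qed.

Lemma opexp_dominated B t : is_bounded_linear B -> opser_dominated (exp_coef t) B.
Proof.
  intro HB. destruct (bl_bound B HB) as [M [HM0 HM]]. exists M, (exp (Rabs t * M)).
  do 2 (split; auto). intro n.
  eapply Rle_trans; [|apply exp_coef_sum_le, Rmult_le_pos; auto; apply Rabs_pos].
  apply Req_le, sum_eq. intros. rewrite exp_coef_abs. unfold exp_coef.
  rewrite Rpow_mult_distr. unfold Rdiv; ring.
Qed.

Lemma opexp_sum B t y : is_bounded_linear B -> exp_op_at B t y (opexp B t y).
Proof. intro HB. apply (opser_sum _ _ _ (opexp_dominated B t HB)). Qed.

Lemma bl_opexp B t : is_bounded_linear B -> is_bounded_linear (opexp B t).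
Proof. intro HB. apply bl_opser; auto. apply opexp_dominated; auto. Qed.

Lemma opexp_0 B y : opexp B 0 y = y.
Proof.
  apply opser_eq.
  replace y with (vsum (opser_term (exp_coef 0) B y) 0) at 2
    by (unfold opser_term; simpl; rewrite exp_coef_0; apply vscal_1).
  apply is_vseries_finite. intros [|k] Hk; [lia|]. unfold opser_term, exp_coef.
  simpl. rewrite Rmult_0_l. unfold Rdiv. rewrite Rmult_0_l. apply vscal_C0.
Qed.

End Bounded_operators.

Lemma sum_shifted (phi : nat -> R) i N :
  sum_f_R0 (fun m => if Nat.leb i m then phi (m - i)%nat else 0) N =
  if Nat.leb i N then sum_f_R0 phi (N - i) else 0.
Proof.
  induction N as [|N IH]; [destruct i; reflexivity|].
  rewrite tech5, IH. destruct (Nat.leb i N) eqn:E1.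
  - apply Nat.leb_le in E1. rewrite (proj2 (Nat.leb_le i (S N))) by lia.
    replace (S N - i)%nat with (S (N - i)) by lia. reflexivity.
  - apply Nat.leb_gt in E1. destruct (Nat.leb i (S N)) eqn:E2; [|ring].
    apply Nat.leb_le in E2. replace (S N - i)%nat with O by lia. simpl. ring.
Qed.

Lemma sum_shifted_le (phi : nat -> R) i N : (forall k, 0 <= phi k) ->
  sum_f_R0 (fun m => if Nat.leb i m then phi (m - i)%nat else 0) N <= sum_f_R0 phi N.
Proof.
  intro Hp. rewrite sum_shifted. destruct (Nat.leb i N).
  - apply partial_sum_mono; auto; lia.
  - apply cond_pos_sum; auto.
Qed.

Section Commuting_sum.
Context {X : CBanach}.
Variables B1 B2 : X -> X.
Hypothesis HB1 : is_bounded_linear B1.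
Hypothesis HB2 : is_bounded_linear B2.
Hypothesis Hcomm : forall y, B1 (B2 y) = B2 (B1 y).
Variable y : X.

Let Bsum (z : X) := vadd (B1 z) (B2 z).
Let mono i j := Nat.iter i B1 (Nat.iter j B2 y).
Let binom_term m i := vscal (RtoC (exp_coef 1 i * exp_coef 1 (m - i))) (mono i (m - i)).

Lemma bl_Bsum : is_bounded_linear Bsum. Proof. apply bl_plus; auto. Qed.

(* [(m+1) d_(m+1) = (B1 + B2) d_m] for [d_m := sum_i B1^i B2^(m-i) y / (i! (m-i)!)],
   by the Pascal recursion of the coefficients. *)
Lemma binomial_sum_step m :
  vscal (RtoC (INR (S m))) (vsum (binom_term (S m)) (S m)) = Bsum (vsum (binom_term m) m).
Proof.
  unfold binom_term. rewrite vsum_scal. unfold Bsum.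
  rewrite (bl_vsum B1), (bl_vsum B2) by auto. rewrite <- vsum_add.
  transitivity (vadd (vsum (fun i => vscal (RtoC (INR i * (exp_coef 1 i * exp_coef 1 (S m - i))))
                                     (mono i (S m - i))) (S m))
                     (vsum (fun i => vscal (RtoC (INR (S m - i) * (exp_coef 1 i * exp_coef 1 (S m - i))))
                                     (mono i (S m - i))) (S m))).
  { rewrite <- vsum_add. apply vsum_ext. intros k Hk.
    rewrite vscal_assoc, <- vscal_distr_c, <- !RtoC_mul, <- RtoC_add.
    f_equal. f_equal. rewrite <- Rmult_plus_distr_r, <- plus_INR. do 3 f_equal. lia. }
  rewrite vsum_S. change (vsum ?f (S m)) with (vadd (vsum f m) (f (S m))). cbv beta.
  rewrite Nat.sub_diag. change (INR 0) with 0.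
  rewrite !Rmult_0_l, vscal_C0, vadd_0l, vscal_C0, vadd_0, <- vsum_add.
  apply vsum_ext. intros i Hi. f_equal.
  - rewrite (bl_scal B1) by auto. replace (S m - S i)%nat with (m - i)%nat by lia.
    rewrite <- Rmult_assoc, exp_coef_S, Rmult_1_l. reflexivity.
  - rewrite (bl_scal B2) by auto. unfold mono. rewrite (iter_comm B1 B2) by (intros; symmetry; auto).
    replace (S m - i)%nat with (S (m - i)) by lia.
    rewrite Rmult_comm, Rmult_assoc, (Rmult_comm (exp_coef 1 (S (m - i)))), exp_coef_S, Rmult_1_l.
    reflexivity.
Qed.

Lemma binomial_commuting m :
  vsum (binom_term m) m = vscal (RtoC (exp_coef 1 m)) (Nat.iter m Bsum y).
Proof.
  induction m as [|m IH].
  - unfold binom_term, mono. simpl. rewrite exp_coef_0, Rmult_1_l. reflexivity.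
  - assert (Hn : INR (S m) <> 0) by (apply not_0_INR; lia).
    transitivity (vscal (RtoC (/ INR (S m)))
                    (vscal (RtoC (INR (S m))) (vsum (binom_term (S m)) (S m)))).
    { rewrite vscal_assoc, <- RtoC_mul, Rinv_l by auto. symmetry; apply vscal_1. }
    rewrite binomial_sum_step, IH, (bl_scal Bsum) by apply bl_Bsum.
    rewrite vscal_assoc, <- RtoC_mul. f_equal. f_equal.
    apply (Rmult_eq_reg_l (INR (S m))); auto. rewrite exp_coef_S. field; auto.
Qed.

(* The Cauchy product of the two exponential series, as a double series. *)
Let cauchy_term i m :=
  if Nat.leb i m
  then vscal (RtoC (exp_coef 1 i))
         (Nat.iter i B1 (vscal (RtoC (exp_coef 1 (m - i))) (Nat.iter (m - i) B2 y)))
  else vzero.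

Lemma cauchy_term_eq i m : (i <= m)%nat -> cauchy_term i m = binom_term m i.
Proof.
  intro H. unfold cauchy_term, binom_term, mono. rewrite (proj2 (Nat.leb_le i m) H).
  rewrite (bl_scal (fun z => Nat.iter i B1 z)) by (apply bl_iter; auto).
  rewrite vscal_assoc, RtoC_mul. reflexivity.
Qed.

Lemma cauchy_square_bound M1 M2 N : 0 <= M1 -> 0 <= M2 ->
  (forall x, vnorm (B1 x) <= M1 * vnorm x) -> (forall x, vnorm (B2 x) <= M2 * vnorm x) ->
  square_norm_sum cauchy_term N <= exp M1 * exp M2 * vnorm y.
Proof.
  intros HM1 HM2 HB1' HB2'. unfold square_norm_sum.
  set (phi := fun i j => exp_coef M1 i * exp_coef M2 j * vnorm y).
  assert (Hphi : forall i j, 0 <= phi i j).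
  { intros. unfold phi. pose proof (vnorm_nonneg y).
    pose proof (exp_coef_nonneg M1 i HM1). pose proof (exp_coef_nonneg M2 j HM2).
    apply Rmult_le_pos; auto. apply Rmult_le_pos; auto. }
  apply Rle_trans with (sum_f_R0 (fun i => sum_f_R0 (phi i) N) N).
  - apply sum_Rle. intros i _. eapply Rle_trans; [|apply (sum_shifted_le (phi i) i); auto].
    apply sum_Rle. intros m _. cbv beta. unfold cauchy_term.
    destruct (Nat.leb i m); [|rewrite vnorm_zero; lra].
    unfold phi. rewrite vnorm_real_scal, Rabs_pos_eq by (apply exp_coef_nonneg; lra).
    rewrite <- (exp_coef_1_mul M1 i), !Rmult_assoc.
    apply Rmult_le_compat_l; [apply exp_coef_nonneg; lra|].
    eapply Rle_trans; [apply (iter_norm_le B1 M1); auto|].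
    apply Rmult_le_compat_l; [apply pow_le; auto|].
    rewrite vnorm_real_scal, Rabs_pos_eq by (apply exp_coef_nonneg; lra).
    rewrite <- (exp_coef_1_mul M2), Rmult_assoc. apply Rmult_le_compat_l; [apply exp_coef_nonneg; lra|].
    apply iter_norm_le; auto.
  - unfold phi.
    assert (Hrow : forall i, sum_f_R0 (fun j => exp_coef M1 i * exp_coef M2 j * vnorm y) N =
                             exp_coef M1 i * (vnorm y * sum_f_R0 (exp_coef M2) N)).
    { intro i. rewrite scal_sum, scal_sum. apply sum_eq; intros; ring. }
    rewrite (sum_eq _ _ _ (fun i _ => Hrow i)), <- scal_sum.
    pose proof (exp_coef_sum_le M1 N HM1). pose proof (exp_coef_sum_le M2 N HM2).
    pose proof (cond_pos_sum (exp_coef M1) N (fun k => exp_coef_nonneg M1 k HM1)).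
    pose proof (cond_pos_sum (exp_coef M2) N (fun k => exp_coef_nonneg M2 k HM2)).
    pose proof (vnorm_nonneg y).
    replace (exp M1 * exp M2 * vnorm y) with (vnorm y * exp M2 * exp M1) by ring.
    apply Rmult_le_compat; [nra|auto|apply Rmult_le_compat_l|]; auto.
Qed.

Theorem opexp_add_comm : opexp Bsum 1 y = opexp B1 1 (opexp B2 1 y).
Proof.
  destruct (bl_bound B1 HB1) as [M1 [HM1 HB1']]. destruct (bl_bound B2 HB2) as [M2 [HM2 HB2']].
  symmetry. apply (double_series_swap cauchy_term _
    (opser_term (exp_coef 1) B1 (opexp B2 1 y)) (opser_term (exp_coef 1) Bsum y)
    _ _ (fun N => cauchy_square_bound M1 M2 N HM1 HM2 HB1' HB2')).
  - intro i. apply (is_vseries_zero_prefix _ _ i).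
    { intros k Hk. unfold cauchy_term. rewrite (proj2 (Nat.leb_gt i k)) by lia. reflexivity. }
    apply (vcv_ext (vsum (fun k => vscal (RtoC (exp_coef 1 i))
                        (Nat.iter i B1 (opser_term (exp_coef 1) B2 y k))))).
    { intro n. apply vsum_ext. intros k _. unfold cauchy_term.
      rewrite (proj2 (Nat.leb_le i (k + i))) by lia. replace (k + i - i)%nat with k by lia.
      reflexivity. }
    apply (bl_vseries (fun z => vscal (RtoC (exp_coef 1 i)) (Nat.iter i B1 z))).
    + apply bl_smul, bl_iter; auto.
    + apply opser_sum, opexp_dominated; auto.
  - intro m. replace (opser_term (exp_coef 1) Bsum y m) with (vsum (fun i => cauchy_term i m) m).
    + apply is_vseries_finite. intros k Hk. unfold cauchy_term.
      rewrite (proj2 (Nat.leb_gt k m)) by lia. reflexivity.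
    + unfold opser_term. rewrite <- binomial_commuting.
      apply vsum_ext. intros. apply cauchy_term_eq; auto.
  - apply opser_sum, opexp_dominated; auto.
  - apply opser_sum, opexp_dominated, bl_Bsum.
Qed.

End Commuting_sum.

(** * The complex exponential *)

Lemma Cmod_le_abs_sum a : Cmod a <= Rabs (fst a) + Rabs (snd a).
Proof.
  destruct a as [p q]. cbn [fst snd].
  assert (Hq : Cmod (0, q) = Rabs q).
  { unfold Cmod. simpl. rewrite <- sqrt_Rsqr_abs. f_equal. unfold Rsqr. ring. }
  replace (p, q) with (Cadd (RtoC p) (0, q)) by (unfold RtoC; cring).
  eapply Rle_trans; [apply Cmod_add|]. rewrite Cmod_RtoC, Hq. lra.
Qed.

Lemma Cmod_ge_abs_fst a : Rabs (fst a) <= Cmod a.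
Proof.
  unfold Cmod. rewrite <- sqrt_Rsqr_abs. apply sqrt_le_1_alt. unfold Rsqr. simpl.
  pose proof (pow2_ge_0 (snd a)). nra.
Qed.

Lemma Cmod_ge_abs_snd a : Rabs (snd a) <= Cmod a.
Proof.
  unfold Cmod. rewrite <- sqrt_Rsqr_abs. apply sqrt_le_1_alt. unfold Rsqr. simpl.
  pose proof (pow2_ge_0 (fst a)). nra.
Qed.

Lemma Complex_complete (u : nat -> Complex) :
  (forall eps, 0 < eps -> exists N, forall m n, (N <= m)%nat -> (N <= n)%nat ->
     Cmod (Cadd (u m) (Copp (u n))) < eps) ->
  exists l, forall eps, 0 < eps -> exists N, forall n, (N <= n)%nat ->
     Cmod (Cadd (u n) (Copp l)) < eps.
Proof.
  intros Hu.
  assert (H1 : Cauchy_crit (fun n => fst (u n))).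
  { intros e He. destruct (Hu e He) as [N HN]. exists N. intros n m Hn Hm.
    eapply Rle_lt_trans; [|apply (HN n m); lia].
    apply (Cmod_ge_abs_fst (Cadd (u n) (Copp (u m)))). }
  assert (H2 : Cauchy_crit (fun n => snd (u n))).
  { intros e He. destruct (Hu e He) as [N HN]. exists N. intros n m Hn Hm.
    eapply Rle_lt_trans; [|apply (HN n m); lia].
    apply (Cmod_ge_abs_snd (Cadd (u n) (Copp (u m)))). }
  destruct (Rcomplete.R_complete _ H1) as [a Ha]. destruct (Rcomplete.R_complete _ H2) as [b Hb].
  exists (a, b). intros e He.
  destruct (Ha (e / 2)) as [N1 HN1]; [lra|]. destruct (Hb (e / 2)) as [N2 HN2]; [lra|].
  exists (N1 + N2)%nat. intros n Hn. eapply Rle_lt_trans; [apply Cmod_le_abs_sum|].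
  specialize (HN1 n ltac:(lia)); specialize (HN2 n ltac:(lia)). unfold Rdist, Rminus in *. simpl. lra.
Qed.

Definition Complex_CBanach : CBanach.
Proof.
  refine (Build_CBanach Complex Cadd C0 Copp Cmul Cmod _ _ _ _ _ _ _ _ _ _ _ _ _);
    try (intros; unfold C0, C1; cring).
  - apply Cmod_nonneg.
  - exact Cmod_eq_0.
  - apply Cmod_add.
  - apply Cmod_mul.
  - apply Complex_complete.
Defined.

Notation CC := Complex_CBanach.

Definition cexp (b : Complex) : Complex := @opexp CC (Cmul b) 1 C1.

Lemma bl_Cmul b : is_bounded_linear (X := CC) (Cmul b).
Proof.
  split; [|split]; [intros; simpl; cring|intros; simpl; cring|].
  exists (Cmod b). intros; simpl. rewrite Cmod_mul. lra.
Qed.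

Lemma iter_Cmul b k w : Nat.iter k (Cmul b) w = Cmul (Cpow b k) w.
Proof. induction k; simpl; [unfold C1; cring|]. rewrite IHk. apply Cmul_assoc. Qed.

Lemma cexp_series b : is_vseries (X := CC) (fun k => Cmul (RtoC (exp_coef 1 k)) (Cpow b k)) (cexp b).
Proof.
  eapply vcv_ext; [|exact (opser_sum (X := CC) _ _ C1 (opexp_dominated _ 1 (bl_Cmul b)))].
  intro n. apply vsum_ext. intros k _. unfold opser_term. simpl. rewrite iter_Cmul, Cmul_1r; auto.
Qed.

Lemma vsum_scal_c {X : CBanach} (c : nat -> Complex) (v : X) n :
  vsum (fun j => vscal (c j) v) n = vscal (vsum (X := CC) c n) v.
Proof. induction n; simpl; auto. rewrite IHn, vscal_distr_c; auto. Qed.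

Lemma iter_vscal {X : CBanach} b k (y : X) : Nat.iter k (vscal b) y = vscal (Cpow b k) y.
Proof. induction k; simpl; [symmetry; apply vscal_1|]. rewrite IHk, vscal_assoc; auto. Qed.

Lemma opexp_scalar {X : CBanach} b (y : X) : opexp (vscal b) 1 y = vscal (cexp b) y.
Proof.
  apply opser_eq.
  apply (vcv_ext (fun n =>
    vscal (vsum (X := CC) (fun k => Cmul (RtoC (exp_coef 1 k)) (Cpow b k)) n) y)).
  - intro n. rewrite <- vsum_scal_c. apply vsum_ext. intros k _.
    unfold opser_term. rewrite iter_vscal, vscal_assoc. reflexivity.
  - apply vcv_scal_c, cexp_series.
Qed.

Lemma opexp_ext {X : CBanach} (B B' : X -> X) t y : is_bounded_linear B ->
  (forall z, B z = B' z) -> opexp B t y = opexp B' t y.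
Proof.
  intros HB Hext. symmetry. apply opser_eq.
  eapply vcv_ext; [|apply (opser_sum _ _ y (opexp_dominated B t HB))].
  intro n. apply vsum_ext. intros k _. unfold opser_term. rewrite (iter_ext B B'); auto.
Qed.

Lemma cexp_add b b' : Cmul (cexp b) (cexp b') = cexp (Cadd b b').
Proof.
  pose proof (@opexp_add_comm CC _ _ (bl_Cmul b) (bl_Cmul b')
                (fun z => ltac:(simpl; cring)) C1) as HP.
  unfold cexp. rewrite (opexp_ext (X := CC) (Cmul (Cadd b b')) (fun z => Cadd (Cmul b z) (Cmul b' z)))
    by (apply bl_Cmul || (intro; cring)).
  etransitivity; [|exact (eq_sym HP)]. exact (eq_sym (@opexp_scalar CC b _)).
Qed.

Lemma cexp_real r : cexp (RtoC r) = RtoC (exp r).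
Proof.
  apply (is_vseries_unique (X := CC) _ _ _ (cexp_series (RtoC r))).
  apply (vcv_ext (X := CC) (fun n => RtoC (sum_f_R0 (fun k => r ^ k / INR (Factorial.fact k)) n))).
  - intro n. induction n as [|n IH]; [simpl; unfold exp_coef, RtoC; cring|].
    change (vsum (X := CC) ?f (S n)) with (Cadd (vsum (X := CC) f n) (f (S n))).
    rewrite <- IH, <- RtoC_pow, <- RtoC_mul, <- RtoC_add, tech5. f_equal. f_equal.
    unfold exp_coef. rewrite pow1. unfold Rdiv. ring.
  - intros e He. destruct (exp_series_cv r e He) as [N HN]. exists N. intros n Hn. simpl.
    replace (Cadd (RtoC _) (Copp (RtoC (exp r))))
      with (RtoC (sum_f_R0 (fun k => r ^ k / INR (Factorial.fact k)) n - exp r))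
      by (unfold RtoC; cring).
    rewrite Cmod_RtoC. apply HN; auto.
Qed.

Definition Cconj (z : Complex) : Complex := (fst z, - snd z).

Lemma Cmod_Cconj z : Cmod (Cconj z) = Cmod z.
Proof. unfold Cmod, Cconj. simpl. f_equal. ring. Qed.

Lemma cexp_conj b : cexp (Cconj b) = Cconj (cexp b).
Proof.
  apply (is_vseries_unique (X := CC) _ _ _ (cexp_series (Cconj b))).
  pose proof (cexp_series b) as H.
  apply (vcv_ext (X := CC) (fun n =>
    Cconj (vsum (X := CC) (fun k => Cmul (RtoC (exp_coef 1 k)) (Cpow b k)) n))).
  - intro n. induction n as [|n IH]; [simpl; unfold Cconj, RtoC, C1; cring|].
    change (vsum (X := CC) ?f (S n)) with (Cadd (vsum (X := CC) f n) (f (S n))). rewrite <- IH.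
    assert (Hp : forall k, Cconj (Cpow b k) = Cpow (Cconj b) k).
    { induction k; simpl; [unfold Cconj, C1; cring|]. rewrite <- IHk. unfold Cconj; cring. }
    rewrite <- Hp. unfold Cconj, RtoC. cring.
  - intros e He. destruct (H e He) as [N HN]. exists N. intros n Hn. specialize (HN n Hn).
    simpl in *. rewrite <- Cmod_Cconj in HN. eapply Rle_lt_trans; [|exact HN].
    right. f_equal. unfold Cconj; cring.
Qed.

(* [|exp b|^2 = exp b * exp (conj b) = exp (2 Re b)] *)
Lemma Cmod_cexp b : Cmod (cexp b) = exp (fst b).
Proof.
  assert (H : Cmul (cexp b) (Cconj (cexp b)) = RtoC (exp (fst b) * exp (fst b))).
  { rewrite <- cexp_conj, cexp_add, <- exp_plus, <- cexp_real. f_equal. unfold Cconj, RtoC. cring. }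
  unfold Cmod. replace (fst (cexp b) ^ 2 + snd (cexp b) ^ 2) with (exp (fst b) * exp (fst b)).
  - apply sqrt_square. left; apply exp_pos.
  - apply (f_equal fst) in H. unfold Cconj, RtoC in H. simpl in H. rewrite <- H. ring.
Qed.

Lemma opexp_scaled_op {X : CBanach} (B : X -> X) s y : is_bounded_linear B ->
  opexp (fun z => vscal (RtoC s) (B z)) 1 y = opexp B s y.
Proof.
  intro HB. symmetry. apply opser_eq.
  eapply vcv_ext; [|apply (opser_sum _ _ y (opexp_dominated _ 1 (bl_smul B (RtoC s) HB)))].
  intro n. apply vsum_ext. intros k _. unfold opser_term.
  assert (Hk : Nat.iter k (fun z => vscal (RtoC s) (B z)) y = vscal (RtoC (s ^ k)) (Nat.iter k B y)).
  { induction k; simpl; [symmetry; apply vscal_1|].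
    rewrite IHk, bl_scal, vscal_assoc, <- RtoC_mul; auto. }
  rewrite Hk, vscal_assoc, <- RtoC_mul, exp_coef_1_mul. reflexivity.
Qed.

Section Exponential_identities.
Context {X : CBanach}.
Variable T : X -> X.
Hypothesis HT : is_bounded_linear T.

Lemma scaled_op_comm (a b : Complex) z : vscal a (T (vscal b z)) = vscal b (vscal a (T z)).
Proof. rewrite (bl_scal T), !vscal_assoc, Cmul_comm by auto. reflexivity. Qed.

Lemma opexp_semigroup s t y : opexp T (s + t) y = opexp T s (opexp T t y).
Proof.
  rewrite <- (opexp_scaled_op T s), <- (opexp_scaled_op T t), <- (opexp_scaled_op T (s + t)) by auto.
  rewrite <- opexp_add_comm by first
    [apply bl_smul; auto | intro; rewrite !scaled_op_comm, !vscal_assoc, Cmul_comm; reflexivity].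
  apply opexp_ext; [apply bl_smul; auto|].
  intro z. rewrite RtoC_add, vscal_distr_c. reflexivity.
Qed.

Lemma bl_sub_scalar z0 : is_bounded_linear (fun z => vsub (T z) (vscal z0 z)).
Proof.
  apply (bl_ext (fun z => vadd (T z) (vscal (Copp z0) z))); [apply bl_plus; auto; apply bl_scalar|].
  intro z. unfold vsub. rewrite vscal_opp_c. reflexivity.
Qed.

Lemma opexp_sub_scalar z0 t y :
  opexp (fun z => vsub (T z) (vscal z0 z)) t y = vscal (cexp (Cmul (RtoC t) (Copp z0))) (opexp T t y).
Proof.
  set (b := Cmul (RtoC t) (Copp z0)).
  rewrite <- opexp_scaled_op by apply bl_sub_scalar.
  rewrite (opexp_ext _ (fun z => vadd (vscal (RtoC t) (T z)) (vscal b z)))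
    by (try (apply bl_smul, bl_sub_scalar); intro z; unfold b;
        rewrite vscal_sub, vscal_assoc; unfold vsub; rewrite <- vscal_opp_c; do 2 f_equal; cring).
  rewrite opexp_add_comm
    by first [apply bl_scalar | apply bl_smul; auto | intro; apply scaled_op_comm].
  rewrite opexp_scalar, opexp_scaled_op by auto.
  apply bl_scal, bl_opexp; auto.
Qed.

End Exponential_identities.

(** * Regular weights are subexponential *)

Lemma log1p_sq_integral b p q :
  is_RInt (fun t => b * t / (1 + t ^ 2)) p q (b / 2 * ln (1 + q ^ 2) - b / 2 * ln (1 + p ^ 2)).
Proof.
  assert (Hpos : forall t, 0 < 1 + t ^ 2) by (intro t; pose proof (pow2_ge_0 t); lra).
  apply (is_RInt_derive (fun t => b / 2 * ln (1 + t ^ 2))).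
  - intros t _. auto_derive; [specialize (Hpos t); lra|]. field. specialize (Hpos t). lra.
  - intros t _. apply continuity_pt_filterlim, derivable_continuous_pt, ex_derive_Reals_0.
    auto_derive. specialize (Hpos t). lra.
Qed.

Section Regular_weight.
Variable w : R -> R.
Hypothesis Hw : is_regular_weight w.

Lemma log_weight_integrable p q : p <= q ->
  Riemann_integrable (fun t => ln (w t) / (1 + t ^ 2)) p q.
Proof.
  destruct Hw as [[Hc [H1 _]] _]. intro Hpq. apply continuity_implies_RiemannInt; auto.
  intros t _. assert (0 < 1 + t ^ 2) by (pose proof (pow2_ge_0 t); lra).
  apply (continuity_pt_div (fun t => ln (w t)) (fun t => 1 + t ^ 2)); [|reg|lra].
  apply (continuity_pt_comp w ln); [apply Hc|]. apply derivable_continuous_pt.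
  exists (/ w t). apply derivable_pt_lim_ln. pose proof (H1 t); lra.
Qed.

(* If [b t <= ln (w t)] everywhere, integrating [b t / (1 + t^2)] over [[0, s]] (for [b > 0])
   or [[-s, 0]] (for [b < 0]) gives [|b|/2 ln (1 + s^2)], which is unbounded. *)
Lemma regular_weight_below_exp b : b <> 0 -> exists tau, w tau < exp (b * tau).
Proof.
  intro Hb. apply NNPP. intro Hn.
  pose proof Hw as [[_ [H1 _]] [M HM]].
  assert (Hlog : forall t, b * t <= ln (w t)).
  { intro t. apply Rnot_lt_le. intro Hc. apply Hn. exists t.
    rewrite <- (exp_ln (w t)) by (pose proof (H1 t); lra). apply exp_increasing; auto. }
  assert (Hint : forall p q, p <= q -> b / 2 * ln (1 + q ^ 2) - b / 2 * ln (1 + p ^ 2) <= M).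
  { intros p q Hpq. pose proof (log1p_sq_integral b p q) as Hg.
    pose (pg := ex_RInt_Reals_0 _ _ _ (ex_intro _ _ Hg)).
    rewrite <- (is_RInt_unique _ _ _ _ Hg), (RInt_Reals _ _ _ pg).
    eapply Rle_trans; [|apply (HM p q (log_weight_integrable p q Hpq))].
    apply RiemannInt_P19; auto. intros t _.
    assert (0 < 1 + t ^ 2) by (pose proof (pow2_ge_0 t); lra).
    apply Rmult_le_compat_r; [left; apply Rinv_0_lt_compat; auto|apply Hlog]. }
  set (K := 2 * (Rabs M + 1) / Rabs b).
  assert (HK : 0 <= K) by (unfold K; pose proof (Rabs_pos M);
                           apply Rmult_le_pos; [lra|left; apply Rinv_0_lt_compat, Rabs_pos_lt; auto]).
  set (s := sqrt (exp K - 1)).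
  assert (Hs0 : 0 <= s) by apply sqrt_pos.
  assert (Hs : ln (1 + s ^ 2) = K).
  { unfold s. rewrite <- Rsqr_pow2, Rsqr_sqrt.
    - replace (1 + (exp K - 1)) with (exp K) by ring. apply ln_exp.
    - pose proof (exp_ineq1_le K). lra. }
  assert (HbK : Rabs b / 2 * K = Rabs M + 1) by (unfold K; field; apply Rabs_no_R0; auto).
  pose proof (Rle_abs M).
  destruct (Rle_or_lt 0 b) as [Hpos|Hneg].
  - specialize (Hint 0 s Hs0). rewrite Hs, pow_i, Rplus_0_r, ln_1 in Hint by lia.
    rewrite Rabs_pos_eq in HbK by auto. lra.
  - specialize (Hint (- s) 0 ltac:(lra)).
    rewrite pow_i, Rplus_0_r, ln_1 in Hint by lia.
    replace ((- s) ^ 2) with (s ^ 2) in Hint by ring. rewrite Hs in Hint.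
    rewrite Rabs_left in HbK by auto. lra.
Qed.

End Regular_weight.

(** * Neumann series along a geometrically decaying orbit *)

Lemma geometric_sum_le q N : 0 <= q < 1 -> sum_f_R0 (fun k => q ^ k) N <= / (1 - q).
Proof.
  intro Hq. pose proof (GP_finite q N) as HG. pose proof (pow_le q (N + 1) (proj1 Hq)).
  apply (Rmult_le_reg_r (1 - q)); [lra|]. rewrite Rinv_l by lra. nra.
Qed.

Section Neumann.
Context {X : CBanach}.
Variable U : X -> X.
Hypothesis HU : is_bounded_linear U.
Variables (q : R).
Hypothesis Hq : 0 <= q < 1.

Definition neumann (y : X) := vlim (vsum (fun n => Nat.iter n U y)).

Definition decays (K : R) (y : X) := forall n, vnorm (Nat.iter n U y) <= K * q ^ n.

Lemma decays_sum_le K y N : 0 <= K -> decays K y -> forall m,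
  sum_f_R0 (fun n => vnorm (Nat.iter (m + n) U y)) N <= K / (1 - q) * q ^ m.
Proof.
  intros HK Hy m. apply Rle_trans with (K * q ^ m * sum_f_R0 (fun k => q ^ k) N).
  - rewrite scal_sum. apply sum_Rle. intros n _. eapply Rle_trans; [apply Hy|].
    rewrite pow_add. right; ring.
  - pose proof (geometric_sum_le q N Hq). pose proof (pow_le q m (proj1 Hq)).
    replace (K / (1 - q) * q ^ m) with (K * q ^ m * / (1 - q)) by (unfold Rdiv; ring).
    apply Rmult_le_compat_l; [apply Rmult_le_pos|]; auto.
Qed.

Lemma neumann_sum K y : 0 <= K -> decays K y -> is_vseries (fun n => Nat.iter n U y) (neumann y).
Proof.
  intros HK Hy.
  destruct (vseries_abs_conv (fun n => Nat.iter n U y) (K / (1 - q) * q ^ 0)) as [l [Hl _]].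
  { intro N. apply (decays_sum_le K y N HK Hy 0). }
  apply vlim_spec; eauto.
Qed.

Lemma neumann_fixed K y : 0 <= K -> decays K y -> vsub (neumann y) (U (neumann y)) = y.
Proof.
  intros HK Hy. pose proof (neumann_sum K y HK Hy) as Hs.
  assert (HUv : U (neumann y) = vsub (neumann y) y).
  { apply (is_vseries_unique (fun n => Nat.iter (S n) U y)).
    - apply (bl_vseries U _ _ HU Hs).
    - apply (is_vseries_shift _ _ Hs). }
  rewrite HUv. unfold vsub. rewrite vopp_vadd, vopp_opp, vadd_assoc, vadd_opp, vadd_0l. reflexivity.
Qed.

Lemma neumann_decays K y : 0 <= K -> decays K y -> decays (K / (1 - q)) (neumann y).
Proof.
  intros HK Hy m. pose proof (neumann_sum K y HK Hy) as Hs.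
  apply (vcv_norm_le (vsum (fun n => Nat.iter (m + n) U y))).
  - eapply vcv_ext; [|apply (bl_vseries _ _ _ (bl_iter U m HU) Hs)].
    intro N. apply vsum_ext. intros n _. symmetry. apply iter_add.
  - intro N. eapply Rle_trans; [apply vsum_norm|]. apply decays_sum_le; auto.
Qed.

End Neumann.

(** * Power series with geometrically bounded coefficients *)

Lemma binomial_C_nonneg n i : 0 <= Binomial.C n i.
Proof.
  unfold Binomial.C. apply Rmult_le_pos; [apply pos_INR|].
  left. apply Rinv_0_lt_compat, Rmult_lt_0_compat; apply INR_fact_lt_0.
Qed.

Lemma Cpow_add_binomial u v n :
  vsum (X := CC) (fun i => Cmul (RtoC (Binomial.C n i)) (Cmul (Cpow u i) (Cpow v (n - i)))) n
  = Cpow (Cadd u v) n.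
Proof.
  pose proof (@binomial_commuting CC (Cmul u) (Cmul v) (bl_Cmul u) (bl_Cmul v)
                (fun z => ltac:(simpl; cring)) C1 n) as HB.
  cbv beta in HB. rewrite (iter_ext (X := CC) _ (Cmul (Cadd u v))) in HB by (intro; simpl; cring).
  rewrite iter_Cmul, Cmul_1r in HB.
  apply (f_equal (Cmul (RtoC (INR (Factorial.fact n))))) in HB.
  rewrite Cmul_assoc, <- RtoC_mul in HB. unfold exp_coef at 3 in HB. rewrite pow1 in HB.
  replace (INR (Factorial.fact n) * (1 / INR (Factorial.fact n))) with 1 in HB
    by (field; apply INR_fact_neq_0).
  rewrite Cmul_1l in HB. rewrite <- HB.
  rewrite (vsum_additive (X := CC) (Cmul (RtoC (INR (Factorial.fact n))))) by (intros; simpl; cring).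
  apply (vsum_ext (X := CC)). intros i Hi. rewrite !iter_Cmul, Cmul_1r. simpl.
  replace (Binomial.C n i) with (INR (Factorial.fact n) * (exp_coef 1 i * exp_coef 1 (n - i))).
  - rewrite !RtoC_mul. cring.
  - unfold exp_coef, Binomial.C. rewrite !pow1.
    pose proof (INR_fact_neq_0 i). pose proof (INR_fact_neq_0 (n - i)). field; auto.
Qed.

Section Power_series.
Context {X : CBanach}.
Variable a : nat -> X.
Variables K rho : R.
Hypothesis HK : 0 <= K.
Hypothesis Hrho : 0 < rho.
Hypothesis Ha : forall k, vnorm (a k) <= K * rho ^ S k.
Variable z0 : Complex.

Definition pseries_term z k := vscal (Cpow (Csub z z0) k) (a k).
Definition pseries z := vlim (vsum (pseries_term z)).

Lemma pseries_sum z : Cmod (Csub z z0) * rho < 1 -> is_vseries (pseries_term z) (pseries z).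
Proof.
  intro Hz. set (s := Cmod (Csub z z0) * rho).
  assert (Hs : 0 <= s < 1) by (split; auto; apply Rmult_le_pos; [apply Cmod_nonneg|lra]).
  destruct (vseries_abs_conv (pseries_term z) (K * rho * / (1 - s))) as [l [Hl _]].
  { intro n. apply Rle_trans with (K * rho * sum_f_R0 (fun k => s ^ k) n).
    - rewrite scal_sum. apply sum_Rle. intros k _. unfold pseries_term.
      rewrite vnorm_scal, Cmod_pow. eapply Rle_trans.
      + apply Rmult_le_compat_l; [apply pow_le, Cmod_nonneg|apply Ha].
      + unfold s. rewrite Rpow_mult_distr. simpl pow. right; ring.
    - apply Rmult_le_compat_l; [apply Rmult_le_pos; lra|apply geometric_sum_le; auto]. }
  apply vlim_spec; eauto.
Qed.

Definition conv_radius := / (2 * rho).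

Lemma conv_radius_pos : 0 < conv_radius.
Proof. apply Rinv_0_lt_compat. lra. Qed.

Lemma lt_conv_radius d : 0 <= d -> d <= conv_radius -> d * rho <= / 2.
Proof.
  intros Hd H. unfold conv_radius in H. rewrite Rinv_mult in H.
  apply (Rmult_le_compat_r rho) in H; [|lra].
  rewrite Rmult_assoc, Rinv_l in H by lra. lra.
Qed.

(* The absolute double series behind recentering, [sum_k (d1 + d2)^k |a k|], is at most
   [K rho sum_k 2^-k] once [d1 + d2] is within the radius. *)
Lemma binomial_square_bound d1 d2 N : 0 <= d1 -> 0 <= d2 -> d1 + d2 <= conv_radius ->
  sum_f_R0 (fun k => sum_f_R0 (fun j => if Nat.leb j k
      then Binomial.C k j * d2 ^ j * d1 ^ (k - j) * vnorm (a k) else 0) N) N <= 2 * K * rho.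
Proof.
  intros H1 H2 H12.
  apply Rle_trans with (sum_f_R0 (fun k => (d2 + d1) ^ k * vnorm (a k)) N).
  { apply sum_Rle. intros k _. rewrite Binomial.binomial, Rmult_comm, scal_sum.
    assert (Hnn : forall j, 0 <= (if Nat.leb j k
        then Binomial.C k j * d2 ^ j * d1 ^ (k - j) * vnorm (a k) else 0)).
    { intro j. destruct (Nat.leb j k); [|lra]. pose proof (binomial_C_nonneg k j).
      pose proof (vnorm_nonneg (a k)). pose proof (pow_le d2 j H2). pose proof (pow_le d1 (k - j) H1).
      apply Rmult_le_pos; [apply Rmult_le_pos; [apply Rmult_le_pos|]|]; auto. }
    assert (Heq : forall M, (k <= M)%nat ->
      sum_f_R0 (fun j => if Nat.leb j k
                         then Binomial.C k j * d2 ^ j * d1 ^ (k - j) * vnorm (a k) else 0) M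
      = sum_f_R0 (fun i => Binomial.C k i * d2 ^ i * d1 ^ (k - i) * vnorm (a k)) k).
    { intros M HM. induction HM.
      - apply sum_eq. intros j Hj. rewrite (proj2 (Nat.leb_le j k) Hj). reflexivity.
      - rewrite tech5, IHHM, (proj2 (Nat.leb_gt (S m) k)) by lia. ring. }
    destruct (Compare_dec.le_lt_dec k N) as [HkN|HNk].
    - rewrite Heq by auto. right. reflexivity.
    - rewrite <- (Heq k) by lia. apply partial_sum_mono; auto. lia. }
  apply Rle_trans with (sum_f_R0 (fun k => K * rho * (/ 2) ^ k) N).
  { apply sum_Rle. intros k _. eapply Rle_trans.
    - apply Rmult_le_compat_l; [apply pow_le; lra|apply Ha].
    - replace ((d2 + d1) ^ k * (K * rho ^ S k)) with (K * rho * ((d2 + d1) * rho) ^ k)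
        by (rewrite Rpow_mult_distr; simpl; ring).
      apply Rmult_le_compat_l; [apply Rmult_le_pos; lra|]. apply pow_incr.
      split; [apply Rmult_le_pos; lra|]. apply lt_conv_radius; lra. }
  replace (sum_f_R0 (fun k => K * rho * (/ 2) ^ k) N) with (K * rho * sum_f_R0 (fun k => (/ 2) ^ k) N)
    by (rewrite scal_sum; apply sum_eq; intros; ring).
  replace (2 * K * rho) with (K * rho * / (1 - / 2)) by field.
  apply Rmult_le_compat_l; [apply Rmult_le_pos; lra|]. apply geometric_sum_le. lra.
Qed.

Definition recenter_term z1 k j :=
  if Nat.leb j k then vscal (Cmul (RtoC (Binomial.C k j)) (Cpow (Csub z1 z0) (k - j))) (a k) else vzero.
Definition recenter_coef z1 j := vlim (vsum (fun k => recenter_term z1 k j)).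

Lemma recenter_term_norm z1 k j : vnorm (recenter_term z1 k j) =
  if Nat.leb j k then Binomial.C k j * Cmod (Csub z1 z0) ^ (k - j) * vnorm (a k) else 0.
Proof.
  unfold recenter_term. destruct (Nat.leb j k); [|apply vnorm_zero].
  rewrite vnorm_scal, Cmod_mul, Cmod_RtoC, Cmod_pow, Rabs_pos_eq by apply binomial_C_nonneg.
  reflexivity.
Qed.

Lemma recenter_coef_sum z1 j : Cmod (Csub z1 z0) < conv_radius ->
  is_vseries (fun k => recenter_term z1 k j) (recenter_coef z1 j) /\
  vnorm (recenter_coef z1 j) <= 2 * K * rho / (conv_radius - Cmod (Csub z1 z0)) ^ j.
Proof.
  intro Hz. set (d1 := Cmod (Csub z1 z0)) in *. set (r1 := conv_radius - d1).
  assert (Hd1 : 0 <= d1) by apply Cmod_nonneg. assert (Hr1 : 0 < r1) by (unfold r1; lra).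
  destruct (vseries_abs_conv (fun k => recenter_term z1 k j) (2 * K * rho / r1 ^ j)) as [l [Hl Hn]].
  { intro N. pose proof (pow_lt r1 j Hr1).
    apply (Rmult_le_reg_l (r1 ^ j)); auto.
    replace (r1 ^ j * (2 * K * rho / r1 ^ j)) with (2 * K * rho) by (field; lra).
    set (phi := fun k j' => if Nat.leb j' k
                 then Binomial.C k j' * r1 ^ j' * d1 ^ (k - j') * vnorm (a k) else 0).
    assert (Hphi : forall k j', 0 <= phi k j').
    { intros. unfold phi. destruct (Nat.leb j' k); [|lra].
      pose proof (binomial_C_nonneg k j'). pose proof (vnorm_nonneg (a k)).
      pose proof (pow_le r1 j' (Rlt_le _ _ Hr1)). pose proof (pow_le d1 (k - j') Hd1).
      apply Rmult_le_pos; [apply Rmult_le_pos; [apply Rmult_le_pos|]|]; auto. }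
    set (N' := Nat.max N j).
    apply Rle_trans with (sum_f_R0 (fun k => sum_f_R0 (phi k) N') N').
    2: { apply (binomial_square_bound d1 r1 N'); unfold r1; lra. }
    apply Rle_trans with (sum_f_R0 (fun k => phi k j) N').
    - rewrite scal_sum. apply Rle_trans with (sum_f_R0 (fun k => phi k j) N).
      + right. apply sum_eq. intros k _. rewrite recenter_term_norm. unfold phi. fold d1.
        destruct (Nat.leb j k); ring.
      + apply partial_sum_mono; auto. lia.
    - apply sum_Rle. intros k _. apply (term_le_partial_sum (phi k)); auto. lia. }
  unfold recenter_coef. rewrite (vlim_eq _ l); auto.
Qed.

Lemma pseries_recenter z1 z : Cmod (Csub z1 z0) < conv_radius ->
  Cmod (Csub z z1) < conv_radius - Cmod (Csub z1 z0) ->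
  is_vseries (fun j => vscal (Cpow (Csub z z1) j) (recenter_coef z1 j)) (pseries z).
Proof.
  intros Hz1 Hz. set (d1 := Cmod (Csub z1 z0)) in *. set (d2 := Cmod (Csub z z1)) in *.
  assert (Hd1 : 0 <= d1) by apply Cmod_nonneg. assert (Hd2 : 0 <= d2) by apply Cmod_nonneg.
  set (F := fun k j => vscal (Cpow (Csub z z1) j) (recenter_term z1 k j)).
  assert (HB : forall N, square_norm_sum F N <= 2 * K * rho).
  { intro N. eapply Rle_trans; [|apply (binomial_square_bound d1 d2 N); auto; lra].
    right. apply sum_eq. intros k _. apply sum_eq. intros j _.
    unfold F. rewrite vnorm_scal, Cmod_pow, recenter_term_norm. fold d1 d2.
    destruct (Nat.leb j k); ring. }
  assert (Hrow : forall k, is_vseries (F k) (pseries_term z k)).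
  { intro k. replace (pseries_term z k) with (vsum (F k) k).
    - apply is_vseries_finite. intros j Hj. unfold F, recenter_term.
      rewrite (proj2 (Nat.leb_gt j k)) by lia. apply vscal_zero.
    - unfold F, recenter_term, pseries_term.
      rewrite (vsum_ext _ (fun j => vscal (Cmul (RtoC (Binomial.C k j))
                 (Cmul (Cpow (Csub z z1) j) (Cpow (Csub z1 z0) (k - j)))) (a k))).
      + rewrite vsum_scal_c, Cpow_add_binomial. do 2 f_equal. unfold Csub; cring.
      + intros j Hj. rewrite (proj2 (Nat.leb_le j k)) by lia. rewrite vscal_assoc. f_equal.
        rewrite !Cmul_assoc. f_equal. apply Cmul_comm. }
  assert (Hcol : forall j,
    is_vseries (fun k => F k j) (vscal (Cpow (Csub z z1) j) (recenter_coef z1 j))).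
  { intro j. apply is_vseries_scal, recenter_coef_sum; auto. }
  destruct (vseries_abs_conv (fun j => vscal (Cpow (Csub z z1) j) (recenter_coef z1 j))
              (2 * K * rho / (1 - d2 / (conv_radius - d1)))) as [L [HL _]].
  { intro N. set (r1 := conv_radius - d1). assert (Hr1 : 0 < r1) by (unfold r1; lra).
    apply Rle_trans with (2 * K * rho * sum_f_R0 (fun j => (d2 / r1) ^ j) N).
    - rewrite scal_sum. apply sum_Rle. intros j _. rewrite vnorm_scal, Cmod_pow.
      eapply Rle_trans;
        [apply Rmult_le_compat_l; [apply pow_le; auto|apply (recenter_coef_sum z1 j Hz1)]|].
      fold d1 d2 r1. unfold Rdiv. rewrite Rpow_mult_distr, pow_inv. right; ring.
    - unfold Rdiv at 1. apply Rmult_le_compat_l; [nra|]. apply geometric_sum_le.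
      split; [apply Rmult_le_pos; [|left; apply Rinv_0_lt_compat]; lra|].
      apply (Rmult_lt_reg_r r1); auto. unfold Rdiv.
      rewrite Rmult_assoc, Rinv_l by (apply Rgt_not_eq; exact Hr1). unfold r1. lra. }
  replace (pseries z) with L; auto.
  symmetry. apply (double_series_swap F _ _ _ _ _ HB Hrow Hcol); auto.
  apply pseries_sum. pose proof (Cmod_sub_triangle z z1 z0) as Ht. fold d1 d2 in Ht.
  assert (Cmod (Csub z z0) * rho <= / 2) by (apply lt_conv_radius; [apply Cmod_nonneg|lra]). lra.
Qed.

Lemma pseries_analytic : analytic_on (Cball z0 conv_radius) pseries.
Proof.
  intros z1 Hz1. unfold Cball in Hz1.
  exists (conv_radius - Cmod (Csub z1 z0)), (recenter_coef z1). split; [lra|].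
  intros z Hz. apply pseries_recenter; auto.
Qed.

End Power_series.

(** * A local resolvent from coefficients of geometric growth *)

Section Resolvent_series.
Context {X : CBanach}.
Variable T : X -> X.
Hypothesis HT : is_bounded_linear T.
Variable x : X.
Variable z0 : Complex.
Variable a : nat -> X.
Variables K rho : R.
Hypothesis HK : 0 <= K.
Hypothesis Hrho : 0 < rho.
Hypothesis Ha : forall k, vnorm (a k) <= K * rho ^ S k.

Definition resolvent_op (z : Complex) (y : X) := vsub (vscal z y) (T y).

Hypothesis Ha0 : resolvent_op z0 (a 0) = x.
Hypothesis HaS : forall k, resolvent_op z0 (a (S k)) = vopp (a k).

Lemma resolvent_op_shift z y :
  resolvent_op z y = vadd (resolvent_op z0 y) (vscal (Csub z z0) y).
Proof.
  unfold resolvent_op. replace z with (Cadd z0 (Csub z z0)) at 1 by (unfold Csub; cring).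
  rewrite vscal_distr_c. unfold vsub. rewrite <- !vadd_assoc. f_equal. apply vadd_comm.
Qed.

Lemma bl_resolvent_op z : is_bounded_linear (resolvent_op z).
Proof.
  apply (bl_ext (fun y => vadd (vscal z y) (vscal (Copp C1) (T y)))).
  - apply bl_plus; [apply bl_scalar|apply bl_smul; auto].
  - intro y. unfold resolvent_op, vsub. rewrite <- vopp_scal. reflexivity.
Qed.

(* The partial sums telescope. *)
Lemma resolvent_op_partial_sum z N :
  resolvent_op z (vsum (pseries_term a z0 z) N) = vadd x (vscal (Cpow (Csub z z0) (S N)) (a N)).
Proof.
  set (h := Csub z z0). induction N as [|N IH].
  - simpl. unfold pseries_term. fold h. simpl Cpow.
    rewrite vscal_1, resolvent_op_shift, Ha0, Cmul_1r. reflexivity.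
  - simpl vsum. rewrite (bl_add (resolvent_op z)), IH by apply bl_resolvent_op.
    unfold pseries_term. fold h.
    rewrite (bl_scal (resolvent_op z)), resolvent_op_shift, HaS by apply bl_resolvent_op.
    rewrite vscal_distr_v, vscal_opp_v, vscal_assoc, <- vadd_assoc. f_equal.
    rewrite vadd_assoc, vadd_opp, vadd_0l.
    change (Cpow h (S (S N))) with (Cmul h (Cpow h (S N))). rewrite Cmul_comm. reflexivity.
Qed.

Lemma local_resolvent_of_coefs : local_resolvent T x z0.
Proof.
  exists (Cball z0 (conv_radius rho)), (pseries a z0). split; [|split; [|split]].
  - intros z Hz. unfold Cball in Hz. exists (conv_radius rho - Cmod (Csub z z0)). split; [lra|].
    intros v Hv. unfold Cball in *. pose proof (Cmod_sub_triangle v z z0). lra.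
  - unfold Cball. replace (Csub z0 z0) with C0 by (unfold Csub, C0; cring).
    rewrite Cmod_C0. apply conv_radius_pos; auto.
  - apply (pseries_analytic a K rho HK Hrho Ha z0).
  - intros z Hz. unfold Cball in Hz. set (h := Csub z z0) in *.
    assert (Hh : Cmod h * rho <= / 2) by (apply lt_conv_radius; auto; [apply Cmod_nonneg|lra]).
    fold (resolvent_op z (pseries a z0 z)).
    apply (vcv_unique (fun N => resolvent_op z (vsum (pseries_term a z0 z) N))).
    + apply bl_vcv; [apply bl_resolvent_op|]. apply (pseries_sum a K rho HK Hrho Ha). fold h. lra.
    + eapply vcv_ext; [intro N; symmetry; apply resolvent_op_partial_sum|].
      apply (vcv_add_vanishing _ _ (fun N => K / 2 ^ N)); [|apply cv_pow_half].
      intro N. rewrite vnorm_scal, Cmod_pow. fold h.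
      eapply Rle_trans; [apply Rmult_le_compat_l; [apply pow_le, Cmod_nonneg|apply Ha]|].
      replace (Cmod h ^ S N * (K * rho ^ S N)) with (K * (Cmod h * rho) ^ S N)
        by (rewrite Rpow_mult_distr; ring).
      assert (Hp : (Cmod h * rho) ^ S N <= (/ 2) ^ S N).
      { apply pow_incr. split; auto. apply Rmult_le_pos; [apply Cmod_nonneg|lra]. }
      apply Rle_trans with (K * (/ 2) ^ S N); [apply Rmult_le_compat_l; auto|].
      unfold Rdiv. rewrite <- pow_inv. simpl pow.
      pose proof (pow_le (/ 2) N ltac:(lra)). nra.
Qed.

End Resolvent_series.

Lemma exp_INR_mul r n : exp (INR n * r) = exp r ^ n.
Proof.
  induction n as [|n IH]; [simpl; rewrite Rmult_0_l; apply exp_0|].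
  rewrite S_INR, Rmult_plus_distr_r, Rmult_1_l, exp_plus, IH. simpl. ring.
Qed.

Lemma weight_iter (w : R -> R) tau n : is_weight w -> w (INR n * tau) <= w 0 * w tau ^ n.
Proof.
  intros [_ [Hge1 Hmul]]. induction n as [|n IH]; [simpl; rewrite Rmult_0_l; lra|].
  rewrite S_INR. replace ((INR n + 1) * tau) with (INR n * tau + tau) by ring.
  eapply Rle_trans; [apply Hmul|]. simpl pow.
  replace (w 0 * (w tau * w tau ^ n)) with (w 0 * w tau ^ n * w tau) by ring.
  pose proof (Hge1 tau). pose proof (Hge1 (INR n * tau)). apply Rmult_le_compat_r; lra.
Qed.

Section Construction.
Context {X : CBanach}.
Variable T : X -> X.
Hypothesis HT : is_bounded_linear T.
Variable x : X.
Variable w : R -> R.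
Hypothesis Hw : is_weight w.
Variable Cx : R.
Hypothesis HCx : 0 < Cx.
Hypothesis Hbound : forall t y, exp_op_at T t x y -> vnorm y <= Cx * w t.
Variable z0 : Complex.
Variable tau : R.
Hypothesis Htau : w tau < exp (fst z0 * tau).

Let A z := vsub (T z) (vscal z0 z).
Let U := opexp A tau.
Let q := exp (- (fst z0 * tau)) * w tau.
Let K0 := Cx * w 0.

Lemma bl_A : is_bounded_linear A. Proof. apply bl_sub_scalar; auto. Qed.
Lemma bl_U : is_bounded_linear U. Proof. apply bl_opexp, bl_A. Qed.

Lemma decay_ratio_bounds : 0 <= q < 1.
Proof.
  destruct Hw as [_ [Hge1 _]]. pose proof (exp_pos (- (fst z0 * tau))). pose proof (Hge1 tau).
  unfold q. split; [nra|]. rewrite exp_Ropp.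
  apply (Rmult_lt_reg_l (exp (fst z0 * tau))); [apply exp_pos|].
  rewrite <- Rmult_assoc, Rinv_r, Rmult_1_l, Rmult_1_r; auto. apply Rgt_not_eq, exp_pos.
Qed.

Lemma decay_const_nonneg : 0 <= K0.
Proof. destruct Hw as [_ [Hge1 _]]. pose proof (Hge1 0). unfold K0. nra. Qed.

Lemma iter_U n : Nat.iter n U x = opexp A (INR n * tau) x.
Proof.
  induction n as [|n IH]; [simpl; rewrite Rmult_0_l, opexp_0; auto|].
  simpl Nat.iter. rewrite IH. unfold U. rewrite <- opexp_semigroup by apply bl_A.
  f_equal. rewrite S_INR. ring.
Qed.

(* [exp (t (T - z0)) = exp (- t z0) exp (t T)] and [|exp (- t z0)| = exp (- t Re z0)]. *)
Lemma orbit_decays : decays U q K0 x.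
Proof.
  intro n. rewrite iter_U. unfold A. rewrite opexp_sub_scalar, vnorm_scal, Cmod_cexp by auto.
  simpl fst. rewrite Rmult_0_l, Rminus_0_r.
  pose proof (Hbound _ _ (opexp_sum T (INR n * tau) x HT)) as Hb.
  replace (INR n * tau * - fst z0) with (INR n * - (fst z0 * tau)) by ring.
  rewrite exp_INR_mul. unfold K0, q. rewrite Rpow_mult_distr.
  pose proof (weight_iter w tau n Hw).
  pose proof (pow_le (exp (- (fst z0 * tau))) n (Rlt_le _ _ (exp_pos _))).
  apply Rle_trans with (exp (- (fst z0 * tau)) ^ n * (Cx * (w 0 * w tau ^ n))).
  - apply Rmult_le_compat_l; auto. eapply Rle_trans; [apply Hb|]. apply Rmult_le_compat_l; lra.
  - right; ring.
Qed.

Fixpoint neumann_iter k : X :=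
  match k with O => neumann U x | S k => neumann U (neumann_iter k) end.

Lemma neumann_iter_decays k : decays U q (K0 * (/ (1 - q)) ^ S k) (neumann_iter k).
Proof.
  pose proof decay_ratio_bounds as Hq. pose proof decay_const_nonneg as HK0.
  assert (Hi : 0 <= / (1 - q)) by (left; apply Rinv_0_lt_compat; lra).
  induction k as [|k IH]; simpl neumann_iter.
  - replace (K0 * (/ (1 - q)) ^ 1) with (K0 / (1 - q)) by (simpl; unfold Rdiv; ring).
    apply (neumann_decays U bl_U q Hq); auto. apply orbit_decays.
  - replace (K0 * (/ (1 - q)) ^ S (S k)) with (K0 * (/ (1 - q)) ^ S k / (1 - q))
      by (simpl; unfold Rdiv; ring).
    apply (neumann_decays U bl_U q Hq); auto. apply Rmult_le_pos; auto. apply pow_le; auto.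
Qed.

Lemma neumann_iter_fixed_0 : vsub (neumann_iter 0) (U (neumann_iter 0)) = x.
Proof.
  apply (neumann_fixed U bl_U q decay_ratio_bounds K0); [apply decay_const_nonneg|apply orbit_decays].
Qed.

Lemma neumann_iter_fixed_S k : vsub (neumann_iter (S k)) (U (neumann_iter (S k))) = neumann_iter k.
Proof.
  apply (neumann_fixed U bl_U q decay_ratio_bounds (K0 * (/ (1 - q)) ^ S k));
    [|apply neumann_iter_decays].
  pose proof decay_ratio_bounds. apply Rmult_le_pos; [apply decay_const_nonneg|].
  apply pow_le. left; apply Rinv_0_lt_compat; lra.
Qed.

(* [G := sum_k tau^(k+1)/(k+1)! A^k], so that [A G = exp (tau A) - I]. *)
Let G := opser (fun k => exp_coef tau (S k)) A.

Lemma G_dominated : opser_dominated (fun k => exp_coef tau (S k)) A.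
Proof.
  destruct (bl_bound A bl_A) as [M [HM0 HM]]. exists M, (Rabs tau * exp (Rabs tau * M)).
  do 2 (split; auto). intro n.
  apply Rle_trans with (Rabs tau * sum_f_R0 (exp_coef (Rabs tau * M)) n).
  - rewrite scal_sum. apply sum_Rle. intros k _.
    eapply Rle_trans; [apply Rmult_le_compat_r; [apply pow_le; auto|apply exp_coef_S_le]|].
    unfold exp_coef. rewrite Rpow_mult_distr. right. unfold Rdiv. ring.
  - apply Rmult_le_compat_l; [apply Rabs_pos|]. apply exp_coef_sum_le.
    apply Rmult_le_pos; auto. apply Rabs_pos.
Qed.

Lemma bl_G : is_bounded_linear G. Proof. apply bl_opser; [apply bl_A|apply G_dominated]. Qed.

Lemma A_G y : A (G y) = vsub (U y) y.
Proof.
  apply (is_vseries_unique (fun k => vscal (RtoC (exp_coef tau (S k))) (Nat.iter (S k) A y))).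
  - apply opser_apply; [apply bl_A|apply G_dominated].
  - pose proof (is_vseries_shift _ _ (opser_sum _ _ y (opexp_dominated A tau bl_A))) as H.
    unfold opser_term at 2 in H. rewrite exp_coef_0, vscal_1 in H. exact H.
Qed.

Lemma resolvent_op_A y : resolvent_op T z0 y = vopp (A y).
Proof. unfold resolvent_op, A, vsub. rewrite vopp_vadd, vopp_opp, vadd_comm. reflexivity. Qed.

Lemma resolvent_op_G y : resolvent_op T z0 (G y) = vsub y (U y).
Proof.
  rewrite resolvent_op_A, A_G. unfold vsub. rewrite vopp_vadd, vopp_opp, vadd_comm. reflexivity.
Qed.

Lemma resolvent_op_G_comm y : resolvent_op T z0 (G y) = G (resolvent_op T z0 y).
Proof.
  rewrite !resolvent_op_A, (bl_opp G) by apply bl_G. f_equal.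
  apply opser_comm; [apply bl_A|apply G_dominated|apply bl_A|reflexivity].
Qed.

Definition resolvent_coef k := vscal (Cpow (Copp C1) k) (Nat.iter (S k) G (neumann_iter k)).

Lemma resolvent_coef_0 : resolvent_op T z0 (resolvent_coef 0) = x.
Proof. unfold resolvent_coef. simpl. rewrite vscal_1, resolvent_op_G. apply neumann_iter_fixed_0. Qed.

Lemma resolvent_coef_S k : resolvent_op T z0 (resolvent_coef (S k)) = vopp (resolvent_coef k).
Proof.
  unfold resolvent_coef. rewrite (bl_scal (resolvent_op T z0)) by (apply bl_resolvent_op; auto).
  rewrite iter_S_inner, (iter_comm G (resolvent_op T z0)) by apply resolvent_op_G_comm.
  rewrite resolvent_op_G, neumann_iter_fixed_S.
  change (Cpow (Copp C1) (S k)) with (Cmul (Copp C1) (Cpow (Copp C1) k)).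
  rewrite <- vscal_assoc, vscal_opp_c, vscal_1. reflexivity.
Qed.

Lemma resolvent_coef_bound : exists rho, 0 < rho /\
  forall k, vnorm (resolvent_coef k) <= K0 * rho ^ S k.
Proof.
  destruct (bl_bound G bl_G) as [g [Hg0 Hg]]. pose proof decay_ratio_bounds as Hq.
  set (r := / (1 - q)). assert (Hr : 0 < r) by (apply Rinv_0_lt_compat; lra).
  exists (g * r + 1). split; [nra|]. intro k.
  unfold resolvent_coef. rewrite vnorm_scal, Cmod_pow, Cmod_Copp, Cmod_C1, pow1, Rmult_1_l.
  eapply Rle_trans; [apply (iter_norm_le G g); auto|].
  pose proof (neumann_iter_decays k O) as Hv. simpl Nat.iter in Hv. rewrite pow_O, Rmult_1_r in Hv.
  apply Rle_trans with (g ^ S k * (K0 * r ^ S k)); [apply Rmult_le_compat_l; auto; apply pow_le; auto|].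
  rewrite <- Rmult_assoc, (Rmult_comm (g ^ S k)), Rmult_assoc, <- Rpow_mult_distr.
  apply Rmult_le_compat_l; [apply decay_const_nonneg|]. apply pow_incr. split; nra.
Qed.

Lemma local_resolvent_of_weight_below_exp : local_resolvent T x z0.
Proof.
  destruct resolvent_coef_bound as [rho [Hrho Hb]].
  apply (local_resolvent_of_coefs T HT x z0 resolvent_coef K0 rho decay_const_nonneg Hrho Hb
           resolvent_coef_0 resolvent_coef_S).
Qed.

End Construction.

Theorem proposition2p2 (X : CBanach) (w : R -> R) (T : X -> X) (x : X) :
  is_regular_weight w ->
  is_bounded_linear T ->
  (exists Cx, 0 < Cx /\ forall t y, exp_op_at T t x y -> vnorm y <= Cx * w t) ->
  forall lam : Complex, local_spectrum T x lam -> Re lam = 0.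
Proof.
  intros Hreg HT [Cx [HCx Hbound]] lam Hsp.
  apply NNPP. intro Hre.
  destruct (regular_weight_below_exp w Hreg (Re lam) Hre) as [tau Htau].
  apply Hsp.
  exact (local_resolvent_of_weight_below_exp T HT x w (proj1 Hreg) Cx HCx Hbound lam tau Htau).
Qed.
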